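(* Let $D\subseteq\mathbb{R}^3\setminus\{0\}$ be open, $\Omega=\mathbb{R}^3\times D$, and let $\vec\mu=(\mu_1,\mu_2,\mu_3):\Omega\to\mathbb{R}^3$ be smooth. Then $\Pi_{\vec\mu}$ defines a Poisson bracket on $\Omega$ (i.e. $\{f,g\}_{\vec\mu}=(\nabla f)^T\Pi_{\vec\mu}\nabla g$ satisfies the Jacobi identity) if and only if there is a smooth $\vec\nu:D\times\mathbb{R}\to\mathbb{R}^3$ with $\vec\mu(\vec M,\vec\gamma)=\vec\nu(\vec\gamma,\vec M\cdot\vec\gamma)$ and $\vec\nu$ satisfies the Jacobi condition equation $$\vec\gamma\cdot \operatorname{curl}_{\vec\gamma}\vec\nu(\vec\gamma,s)+\vec\nu(\vec\gamma,s)\cdot\big(\vec\gamma\times \partial_s\vec\nu(\vec\gamma,s)\big)=0\quad\text{for all }(\vec\gamma,s)\in D\times\mathbb{R},$$ where $\operatorname{curl}_{\vec\gamma}$ is the curl with respect to $\vec\gamma$ with $s$ held fixed.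
   Context: Coordinates on $\mathbb{R}^6$ are $(\vec M,\vec\gamma)=(M_1,M_2,M_3,\gamma_1,\gamma_2,\gamma_3)$. For a smooth $\vec\mu=(\mu_1,\mu_2,\mu_3)$ of $(\vec M,\vec\gamma)$, $\Pi_{\vec\mu}$ is the skew-symmetric $6\times6$ matrix $$\Pi_{\vec\mu}=\begin{bmatrix}0&-M_3-\mu_3&M_2+\mu_2&0&-\gamma_3&\gamma_2\\ M_3+\mu_3&0&-M_1-\mu_1&\gamma_3&0&-\gamma_1\\ -M_2-\mu_2&M_1+\mu_1&0&-\gamma_2&\gamma_1&0\\ 0&-\gamma_3&\gamma_2&0&0&0\\ \gamma_3&0&-\gamma_1&0&0&0\\ -\gamma_2&\gamma_1&0&0&0&0\end{bmatrix},$$ and $\{f,g\}_{\vec\mu}=(\nabla f)^T\Pi_{\vec\mu}\nabla g$ for smooth $f,g$ (gradient in all six variables). *)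

From Stdlib Require Import Reals List Arith ClassicalEpsilon.
Open Scope R_scope.

(** Points of R^n are represented as [Vec := nat -> R]; only the coordinates
    0..n-1 are used (distances, partial derivatives).  Any set that is open in
    the sense of [open_n n] and any function continuous in the sense of
    [cont_on n] automatically ignores coordinates >= n. *)
Definition Vec := nat -> R.

Definition R3 := (R * R * R)%type.
Definition c1 (v : R3) : R := fst (fst v).
Definition c2 (v : R3) : R := snd (fst v).
Definition c3 (v : R3) : R := snd v.
Definition dot3 (a b : R3) : R := c1 a * c1 b + c2 a * c2 b + c3 a * c3 b.
Definition cross3 (a b : R3) : R3 :=
  (c2 a * c3 b - c3 a * c2 b, c3 a * c1 b - c1 a * c3 b, c1 a * c2 b - c2 a * c1 b).
Definition zero3 : R3 := (0, 0, 0).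

Definition sumn (n : nat) (F : nat -> R) : R :=
  fold_right Rplus 0 (map F (seq 0 n)).

Definition distn (n : nat) (x y : Vec) : R := sumn n (fun i => Rabs (x i - y i)).

Definition open_n (n : nat) (U : Vec -> Prop) : Prop :=
  forall x, U x -> exists r, 0 < r /\ forall y, distn n y x < r -> U y.

Definition cont_on (n : nat) (U : Vec -> Prop) (f : Vec -> R) : Prop :=
  forall x, U x -> forall eps, 0 < eps ->
    exists delta, 0 < delta /\
      forall y, U y -> distn n y x < delta -> Rabs (f y - f x) < eps.

Definition upd (x : Vec) (i : nat) (t : R) : Vec :=
  fun j => if Nat.eqb j i then t else x j.

(** i-th partial derivative (its value where it exists; arbitrary elsewhere). *)
Definition pd (i : nat) (f : Vec -> R) (x : Vec) : R :=
  epsilon (inhabits 0)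
    (fun l => derivable_pt_lim (fun t => f (upd x i t)) (x i) l).

Fixpoint iter_pd (l : list nat) (f : Vec -> R) : Vec -> R :=
  match l with
  | nil => f
  | i :: l' => pd i (iter_pd l' f)
  end.

Definition smooth_on (n : nat) (U : Vec -> Prop) (f : Vec -> R) : Prop :=
  forall l : list nat, (forall i, In i l -> (i < n)%nat) ->
    cont_on n U (iter_pd l f) /\
    (forall i x, (i < n)%nat -> U x ->
       exists d, derivable_pt_lim (fun t => iter_pd l f (upd x i t)) (x i) d).

Definition vM (x : Vec) : R3 := (x 0%nat, x 1%nat, x 2%nat).
Definition vG (x : Vec) : R3 := (x 3%nat, x 4%nat, x 5%nat).

Definition pack4 (g : R3) (s : R) : Vec :=
  fun i => match i with
           | 0%nat => c1 g | 1%nat => c2 g | 2%nat => c3 g | 3%nat => s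
           | _ => 0 end.

Definition Omega (D : R3 -> Prop) : Vec -> Prop := fun x => D (vG x).

Definition Pi (mu : R3 -> R3 -> R3) (x : Vec) (i j : nat) : R :=
  let m := mu (vM x) (vG x) in
  let A1 := x 0%nat + c1 m in
  let A2 := x 1%nat + c2 m in
  let A3 := x 2%nat + c3 m in
  let g1 := x 3%nat in let g2 := x 4%nat in let g3 := x 5%nat in
  match i, j with
  | 0%nat, 1%nat => - A3 | 0%nat, 2%nat => A2 | 0%nat, 4%nat => - g3 | 0%nat, 5%nat => g2
  | 1%nat, 0%nat => A3 | 1%nat, 2%nat => - A1 | 1%nat, 3%nat => g3 | 1%nat, 5%nat => - g1
  | 2%nat, 0%nat => - A2 | 2%nat, 1%nat => A1 | 2%nat, 3%nat => - g2 | 2%nat, 4%nat => g1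
  | 3%nat, 1%nat => - g3 | 3%nat, 2%nat => g2
  | 4%nat, 0%nat => g3 | 4%nat, 2%nat => - g1
  | 5%nat, 0%nat => - g2 | 5%nat, 1%nat => g1
  | _, _ => 0
  end.

Definition bracket (mu : R3 -> R3 -> R3) (f g : Vec -> R) : Vec -> R :=
  fun x => sumn 6 (fun i => sumn 6 (fun j => pd i f x * Pi mu x i j * pd j g x)).

Definition is_Poisson (D : R3 -> Prop) (mu : R3 -> R3 -> R3) : Prop :=
  forall f g h : Vec -> R,
    smooth_on 6 (Omega D) f -> smooth_on 6 (Omega D) g -> smooth_on 6 (Omega D) h ->
    forall x, Omega D x ->
      bracket mu f (bracket mu g h) x + bracket mu g (bracket mu h f) x
      + bracket mu h (bracket mu f g) x = 0.

Definition smooth_mu (D : R3 -> Prop) (mu : R3 -> R3 -> R3) : Prop :=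
  smooth_on 6 (Omega D) (fun x => c1 (mu (vM x) (vG x))) /\
  smooth_on 6 (Omega D) (fun x => c2 (mu (vM x) (vG x))) /\
  smooth_on 6 (Omega D) (fun x => c3 (mu (vM x) (vG x))).

Definition DxR (D : R3 -> Prop) : Vec -> Prop :=
  fun y => D (y 0%nat, y 1%nat, y 2%nat).

Definition nu4 (nu : R3 -> R -> R3) (k : nat) : Vec -> R :=
  fun y => let v := nu (y 0%nat, y 1%nat, y 2%nat) (y 3%nat) in
           match k with 0%nat => c1 v | 1%nat => c2 v | _ => c3 v end.

Definition smooth_nu (D : R3 -> Prop) (nu : R3 -> R -> R3) : Prop :=
  smooth_on 4 (DxR D) (nu4 nu 0) /\ smooth_on 4 (DxR D) (nu4 nu 1) /\
  smooth_on 4 (DxR D) (nu4 nu 2).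

Definition curl_g (nu : R3 -> R -> R3) (g : R3) (s : R) : R3 :=
  let y := pack4 g s in
  (pd 1 (nu4 nu 2) y - pd 2 (nu4 nu 1) y,
   pd 2 (nu4 nu 0) y - pd 0 (nu4 nu 2) y,
   pd 0 (nu4 nu 1) y - pd 1 (nu4 nu 0) y).

Definition ds_nu (nu : R3 -> R -> R3) (g : R3) (s : R) : R3 :=
  let y := pack4 g s in
  (pd 3 (nu4 nu 0) y, pd 3 (nu4 nu 1) y, pd 3 (nu4 nu 2) y).

Definition jacobi_condition (D : R3 -> Prop) (nu : R3 -> R -> R3) : Prop :=
  forall (g : R3) (s : R), D g ->
    dot3 g (curl_g nu g s) + dot3 (nu g s) (cross3 g (ds_nu nu g s)) = 0.

(** The Jacobi identity for [{f,g} = grad f^T Pi grad g] reduces, after the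
    second-derivative terms cancel (symmetry of Hessians, skew-symmetry of [Pi]), to
    the vanishing of the Jacobiator [J_aij = sum_k Pi_ak d_k Pi_ij + cyclic], and
    coordinate functions show that this is also necessary.  For [Pi_mu], the entries
    of [J] with one [gamma]-index and two [M]-indices are the components of
    [gamma x grad_M mu_l]; so a Poisson [mu] has [grad_M mu] parallel to [gamma] and is
    constant on the planes [M . gamma = s], which yields the smooth
    [nu (gamma, s) = mu (s gamma / |gamma|^2, gamma)] (here [gamma <> 0] is used).
    Conversely, once [mu = nu (gamma, M . gamma)], the chain rule turns [J] into
    [J_aij = - eps_aij (gamma . curl_gamma nu + nu . (gamma x d_s nu))], with the
    Levi-Civita symbol supported on [M]-indices, which proves both directions. *)

From Stdlib Require Import Reals Lra Lia List Arith ClassicalEpsilon.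
From Stdlib Require Import FunctionalExtensionality PropExtensionality.
Open Scope R_scope.

Lemma upd_same x i t : upd x i t i = t.
Proof. unfold upd; now rewrite Nat.eqb_refl. Qed.

Lemma upd_other x i j t : j <> i -> upd x i t j = x j.
Proof. intro H; unfold upd; apply Nat.eqb_neq in H; now rewrite H. Qed.

Lemma upd_upd x i s t : upd (upd x i s) i t = upd x i t.
Proof. apply functional_extensionality; intro j; unfold upd; now destruct (Nat.eqb j i). Qed.

Lemma upd_id x i : upd x i (x i) = x.
Proof.
  apply functional_extensionality; intro j; unfold upd.
  destruct (Nat.eqb_spec j i); subst; auto.
Qed.

Lemma upd_comm x i k s t : i <> k -> upd (upd x i s) k t = upd (upd x k t) i s.
Proof.
  intro H; apply functional_extensionality; intro j; unfold upd.
  destruct (Nat.eqb_spec j k); destruct (Nat.eqb_spec j i); subst; auto; lia.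
Qed.

Lemma upd_upd_upd x i k s t u : i <> k -> upd (upd (upd x i s) k t) i u = upd (upd x i u) k t.
Proof. intro H. rewrite (upd_comm x i k s t H), upd_upd. now rewrite upd_comm by auto. Qed.

Lemma derivable_pt_lim_value f x a b : derivable_pt_lim f x a -> a = b -> derivable_pt_lim f x b.
Proof. intros; subst; auto. Qed.

Lemma derivable_pt_lim_ext f g x a :
  (forall t, f t = g t) -> derivable_pt_lim f x a -> derivable_pt_lim g x a.
Proof. intros H; replace g with f; auto; apply functional_extensionality; auto. Qed.

Lemma derivable_pt_lim_local f g t0 l r : 0 < r -> (forall t, Rabs (t - t0) < r -> f t = g t) ->
  derivable_pt_lim f t0 l -> derivable_pt_lim g t0 l.
Proof.
  intros Hr Hfg H eps He. destruct (H eps He) as [d Hd].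
  assert (Hm : 0 < Rmin d r) by (apply Rmin_pos; [apply cond_pos|lra]).
  exists (mkposreal _ Hm). intros h Hh Hh2. simpl in Hh2.
  assert (E1 : f (t0 + h) = g (t0 + h)).
  { apply Hfg. replace (t0 + h - t0) with h by ring. eapply Rlt_le_trans; eauto; apply Rmin_r. }
  assert (E2 : f t0 = g t0).
  { apply Hfg. replace (t0 - t0) with 0 by ring. rewrite Rabs_R0; lra. }
  rewrite <- E1, <- E2. apply Hd; auto. eapply Rlt_le_trans; eauto; apply Rmin_l.
Qed.

Lemma derivable_pt_lim_upd x k j :
  derivable_pt_lim (fun t => upd x k t j) (x k) (if Nat.eqb j k then 1 else 0).
Proof.
  destruct (Nat.eqb_spec j k).
  - subst. apply (derivable_pt_lim_ext (fun t => t)).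
    + intro; now rewrite upd_same.
    + apply derivable_pt_lim_id.
  - apply (derivable_pt_lim_ext (fun _ => x j)).
    + intro; now rewrite upd_other.
    + apply derivable_pt_lim_const.
Qed.

Lemma MVT_unordered (f f' : R -> R) a b :
  (forall c, Rmin a b <= c <= Rmax a b -> derivable_pt_lim f c (f' c)) ->
  exists c, Rmin a b <= c <= Rmax a b /\ f b - f a = f' c * (b - a).
Proof.
  intros H. destruct (Rtotal_order a b) as [Hab|[Hab|Hab]].
  - rewrite Rmin_left, Rmax_right in H by lra.
    destruct (MVT_cor2 f f' a b Hab H) as [c [Hc1 Hc2]].
    exists c. rewrite Rmin_left, Rmax_right by lra. split; [lra|auto].
  - subst. exists b. rewrite Rmin_left, Rmax_left by lra. split; [lra|ring].
  - rewrite Rmin_right, Rmax_left in H by lra.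
    destruct (MVT_cor2 f f' b a Hab H) as [c [Hc1 Hc2]].
    exists c. rewrite Rmin_right, Rmax_left by lra. split; lra.
Qed.

Lemma Rabs_between a b c : Rmin a b <= c <= Rmax a b -> Rabs (c - a) <= Rabs (b - a).
Proof.
  intros [H1 H2]. unfold Rmin, Rmax in *. destruct (Rle_dec a b);
  unfold Rabs; destruct (Rcase_abs _); destruct (Rcase_abs _); lra.
Qed.

Lemma sumn_0 F : sumn 0 F = 0.
Proof. reflexivity. Qed.

Lemma sumn_S n F : sumn (S n) F = sumn n F + F n.
Proof.
  unfold sumn. rewrite seq_S, map_app, fold_right_app. simpl.
  induction (map F (seq 0 n)) as [|a l IH]; simpl; [ring|rewrite IH; ring].
Qed.

Lemma sumn_ext n F G : (forall i, (i < n)%nat -> F i = G i) -> sumn n F = sumn n G.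
Proof.
  induction n; intros H; [reflexivity|].
  rewrite !sumn_S, IHn, H; auto; intros; apply H; lia.
Qed.

Lemma sumn_plus n F G : sumn n (fun i => F i + G i) = sumn n F + sumn n G.
Proof. induction n; [rewrite ?sumn_0; ring|]. rewrite !sumn_S, IHn; ring. Qed.

Lemma sumn_scal n c F : sumn n (fun i => c * F i) = c * sumn n F.
Proof. induction n; [rewrite ?sumn_0; ring|]. rewrite !sumn_S, IHn; ring. Qed.

Lemma sumn_scal_r n c F : sumn n (fun i => F i * c) = sumn n F * c.
Proof. induction n; [rewrite ?sumn_0; ring|]. rewrite !sumn_S, IHn; ring. Qed.

Lemma sumn_const n c : sumn n (fun _ => c) = INR n * c.
Proof. induction n; [rewrite sumn_0; simpl; ring|]. rewrite sumn_S, IHn, S_INR; ring. Qed.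

Lemma sumn_zero n F : (forall i, (i < n)%nat -> F i = 0) -> sumn n F = 0.
Proof.
  intro H; rewrite (sumn_ext n F (fun _ => 0)), sumn_const by auto; ring.
Qed.

Lemma sumn_swap n m F :
  sumn n (fun i => sumn m (fun j => F i j)) = sumn m (fun j => sumn n (fun i => F i j)).
Proof.
  induction n.
  - rewrite sumn_0; symmetry; apply sumn_zero; intros; apply sumn_0.
  - rewrite sumn_S, IHn, <- sumn_plus. apply sumn_ext; intros; now rewrite sumn_S.
Qed.

Lemma sumn_delta n a F :
  (a < n)%nat -> sumn n (fun d => (if Nat.eqb a d then 1 else 0) * F d) = F a.
Proof.
  induction n; intros H; [lia|]. rewrite sumn_S. destruct (Nat.eqb_spec a n).
  - subst. rewrite sumn_zero; [ring|]. intros i Hi. destruct (Nat.eqb_spec n i); [lia|ring].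
  - rewrite IHn by lia. ring.
Qed.

Lemma sumn_le n F G : (forall i, (i < n)%nat -> F i <= G i) -> sumn n F <= sumn n G.
Proof.
  induction n; intros H; [rewrite !sumn_0; lra|]. rewrite !sumn_S.
  pose proof (H n ltac:(lia)). pose proof (IHn ltac:(intros; apply H; lia)). lra.
Qed.

Lemma sumn_nonneg n F : (forall i, (i < n)%nat -> 0 <= F i) -> 0 <= sumn n F.
Proof. intro H. pose proof (sumn_le n (fun _ => 0) F H). rewrite sumn_zero in H0; auto. Qed.

Lemma sumn_term_le n F i : (forall j, (j < n)%nat -> 0 <= F j) -> (i < n)%nat -> F i <= sumn n F.
Proof.
  induction n; intros H Hi; [lia|]. rewrite sumn_S. destruct (Nat.eq_dec i n).
  - subst. pose proof (sumn_nonneg n F ltac:(intros; apply H; lia)); lra.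
  - pose proof (IHn ltac:(intros; apply H; lia) ltac:(lia)). pose proof (H n ltac:(lia)); lra.
Qed.

Lemma derivable_pt_lim_sumn n G G' x : (forall k, (k < n)%nat -> derivable_pt_lim (G k) x (G' k)) ->
  derivable_pt_lim (fun t => sumn n (fun k => G k t)) x (sumn n G').
Proof.
  induction n; intros H.
  - apply (derivable_pt_lim_ext (fun _ => 0)); [intros; now rewrite sumn_0|].
    apply derivable_pt_lim_const.
  - apply (derivable_pt_lim_ext (fun t => sumn n (fun k => G k t) + G n t)).
    + intros; now rewrite sumn_S.
    + rewrite sumn_S. apply derivable_pt_lim_plus; auto.
Qed.

Lemma finite_delta n (P : nat -> R -> Prop) :
  (forall k d d', P k d -> 0 < d' <= d -> P k d') ->
  (forall k, (k < n)%nat -> exists d, 0 < d /\ P k d) ->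
  exists d, 0 < d /\ forall k, (k < n)%nat -> P k d.
Proof.
  intros Hmono. induction n; intros H.
  - exists 1; split; [lra| intros; lia].
  - destruct IHn as [d1 [Hd1 H1]]; [intros; apply H; lia|].
    destruct (H n ltac:(lia)) as [d2 [Hd2 H2]].
    exists (Rmin d1 d2). split; [apply Rmin_pos; auto|].
    intros k Hk. destruct (Nat.eq_dec k n).
    + subst. eapply Hmono; eauto. split; [apply Rmin_pos; auto| apply Rmin_r].
    + eapply Hmono; [apply H1; lia|]. split; [apply Rmin_pos; auto| apply Rmin_l].
Qed.

Lemma distn_coord n x y i : (i < n)%nat -> Rabs (x i - y i) <= distn n x y.
Proof.
  intros; unfold distn; apply (sumn_term_le n (fun i => Rabs (x i - y i))); auto.
  intros; apply Rabs_pos.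
Qed.

Lemma distn_upd n x i t : distn n (upd x i t) x <= Rabs (t - x i).
Proof.
  unfold distn. induction n; [rewrite sumn_0; apply Rabs_pos|].
  rewrite sumn_S. destruct (Nat.eq_dec n i).
  - subst. rewrite upd_same, sumn_zero; [lra|]. intros j Hj. rewrite upd_other by lia.
    replace (x j - x j) with 0 by ring; apply Rabs_R0.
  - rewrite upd_other by auto. replace (x n - x n) with 0 by ring; rewrite Rabs_R0. lra.
Qed.

Lemma distn_triangle n x y z : distn n x z <= distn n x y + distn n y z.
Proof.
  unfold distn. rewrite <- sumn_plus. apply sumn_le; intros.
  replace (x i - z i) with ((x i - y i) + (y i - z i)) by ring. apply Rabs_triang.
Qed.

Lemma distn_upd2 n x i k s t : distn n (upd (upd x i s) k t) x <= Rabs (s - x i) + Rabs (t - x k).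
Proof.
  destruct (Nat.eq_dec i k).
  - subst. rewrite upd_upd. pose proof (distn_upd n x k t). pose proof (Rabs_pos (s - x k)). lra.
  - eapply Rle_trans; [apply (distn_triangle n _ (upd x i s))|].
    pose proof (distn_upd n (upd x i s) k t). rewrite upd_other in H by auto.
    pose proof (distn_upd n x i s). lra.
Qed.

Lemma distn_le_coords n y q p : (forall i, (i < n)%nat -> Rabs (y i - p i) <= Rabs (q i - p i)) ->
  distn n y p <= distn n q p.
Proof. intros; unfold distn; apply sumn_le; auto. Qed.

Lemma open_upd n U x i : open_n n U -> U x ->
  exists r, 0 < r /\ forall t, Rabs (t - x i) < r -> U (upd x i t).
Proof.
  intros Hop Hx. destruct (Hop x Hx) as [r [Hr H]]. exists r; split; auto.
  intros t Ht. apply H. pose proof (distn_upd n x i t). lra.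
Qed.

(** * Partial derivatives and smoothness *)

Lemma pd_eq f x i l : derivable_pt_lim (fun t => f (upd x i t)) (x i) l -> pd i f x = l.
Proof.
  intro H. unfold pd.
  pose proof (epsilon_spec (inhabits 0)
    (fun l => derivable_pt_lim (fun t => f (upd x i t)) (x i) l) (ex_intro _ l H)) as H1.
  eapply uniqueness_limite; eauto.
Qed.

Lemma pd_spec f x i : (exists l, derivable_pt_lim (fun t => f (upd x i t)) (x i) l) ->
  derivable_pt_lim (fun t => f (upd x i t)) (x i) (pd i f x).
Proof. intros [l H]. now rewrite (pd_eq _ _ _ _ H). Qed.

Lemma pd_const i c x : pd i (fun _ => c) x = 0.
Proof. apply pd_eq, derivable_pt_lim_const. Qed.

Lemma pd_coord i j x : pd i (fun y => y j) x = if Nat.eqb j i then 1 else 0.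
Proof. apply pd_eq, derivable_pt_lim_upd. Qed.

Definition eq_on (U : Vec -> Prop) (f g : Vec -> R) : Prop := forall x, U x -> f x = g x.

Lemma pd_local n U f g i : open_n n U -> eq_on U f g -> eq_on U (pd i f) (pd i g).
Proof.
  intros Hop H x Hx. destruct (open_upd n U x i Hop Hx) as [r [Hr Hr']].
  unfold pd. f_equal. apply functional_extensionality; intro l.
  apply propositional_extensionality.
  split; apply derivable_pt_lim_local with r; auto; intros t Ht;
    first [apply H | symmetry; apply H]; auto.
Qed.

Lemma iter_pd_local n U f g l : open_n n U -> eq_on U f g -> eq_on U (iter_pd l f) (iter_pd l g).
Proof. intros Hop H. induction l; simpl; auto. now apply (pd_local n). Qed.

Lemma iter_pd_app l i f : iter_pd (l ++ i :: nil) f = iter_pd l (pd i f).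
Proof. induction l; simpl; auto. now rewrite IHl. Qed.

Lemma cont_on_local n U f g : eq_on U f g -> cont_on n U f -> cont_on n U g.
Proof.
  intros H Hc x Hx eps He. destruct (Hc x Hx eps He) as [d [Hd0 Hd1]].
  exists d; split; auto. intros y Hy Hyx. rewrite <- !H; auto.
Qed.

Lemma cont_on_const n U c : cont_on n U (fun _ => c).
Proof.
  intros x Hx eps He. exists 1; split; [lra|]. intros.
  replace (c - c) with 0 by ring. rewrite Rabs_R0; lra.
Qed.

Lemma cont_on_coord n U j : (j < n)%nat -> cont_on n U (fun x => x j).
Proof.
  intros Hj x Hx eps He. exists eps; split; auto. intros y Hy Hyx.
  pose proof (distn_coord n y x j Hj). lra.
Qed.

Lemma cont_on_plus n U f g : cont_on n U f -> cont_on n U g -> cont_on n U (fun x => f x + g x).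
Proof.
  intros Hf Hg x Hx eps He.
  destruct (Hf x Hx (eps/2) ltac:(lra)) as [d1 [Hd1 H1]].
  destruct (Hg x Hx (eps/2) ltac:(lra)) as [d2 [Hd2 H2]].
  exists (Rmin d1 d2); split; [apply Rmin_pos; auto|]. intros y Hy Hyx.
  pose proof (H1 y Hy (Rlt_le_trans _ _ _ Hyx (Rmin_l _ _))).
  pose proof (H2 y Hy (Rlt_le_trans _ _ _ Hyx (Rmin_r _ _))).
  replace (f y + g y - (f x + g x)) with ((f y - f x) + (g y - g x)) by ring.
  eapply Rle_lt_trans; [apply Rabs_triang|]. lra.
Qed.

Lemma cont_on_mult n U f g : cont_on n U f -> cont_on n U g -> cont_on n U (fun x => f x * g x).
Proof.
  intros Hf Hg x Hx eps He.
  set (A := Rabs (f x) + 1). set (B := Rabs (g x) + 1).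
  assert (HA : 1 <= A) by (unfold A; pose proof (Rabs_pos (f x)); lra).
  assert (HB : 1 <= B) by (unfold B; pose proof (Rabs_pos (g x)); lra).
  destruct (Hf x Hx (eps/(2*B)) ltac:(apply Rdiv_lt_0_compat; lra)) as [d1 [Hd1 H1]].
  destruct (Hg x Hx (Rmin 1 (eps/(2*A))) ltac:(apply Rmin_pos; [lra|apply Rdiv_lt_0_compat; lra]))
    as [d2 [Hd2 H2]].
  exists (Rmin d1 d2); split; [apply Rmin_pos; auto|]. intros y Hy Hyx.
  pose proof (H1 y Hy (Rlt_le_trans _ _ _ Hyx (Rmin_l _ _))) as E1.
  pose proof (H2 y Hy (Rlt_le_trans _ _ _ Hyx (Rmin_r _ _))) as E2.
  assert (E2a : Rabs (g y - g x) < 1) by exact (Rlt_le_trans _ _ _ E2 (Rmin_l _ _)).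
  assert (E2b : Rabs (g y - g x) < eps/(2*A)) by exact (Rlt_le_trans _ _ _ E2 (Rmin_r _ _)).
  assert (Hgy : Rabs (g y) <= B).
  { unfold B. replace (g y) with ((g y - g x) + g x) by ring.
    pose proof (Rabs_triang (g y - g x) (g x)). lra. }
  replace (f y * g y - f x * g x) with ((f y - f x) * g y + f x * (g y - g x)) by ring.
  eapply Rle_lt_trans; [apply Rabs_triang|]. rewrite !Rabs_mult.
  assert (T1 : Rabs (f y - f x) * Rabs (g y) < eps/(2*B) * B).
  { apply Rle_lt_trans with (Rabs (f y - f x) * B).
    - apply Rmult_le_compat_l; [apply Rabs_pos|lra].
    - apply Rmult_lt_compat_r; lra. }
  assert (T2 : Rabs (f x) * Rabs (g y - g x) <= A * (eps/(2*A))).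
  { apply Rmult_le_compat; try apply Rabs_pos; [unfold A|]; lra. }
  replace (eps/(2*B) * B) with (eps/2) in T1 by (field; lra).
  replace (A * (eps/(2*A))) with (eps/2) in T2 by (field; lra).
  lra.
Qed.

Definition cont_partials (n : nat) (U : Vec -> Prop) (f : Vec -> R) : Prop :=
  cont_on n U f /\ (forall i x, (i < n)%nat -> U x ->
       exists d, derivable_pt_lim (fun t => f (upd x i t)) (x i) d).

Definition Ck_on (n : nat) (U : Vec -> Prop) (k : nat) (f : Vec -> R) : Prop :=
  forall l, (forall i, In i l -> (i < n)%nat) -> (length l <= k)%nat -> cont_partials n U (iter_pd l f).

Lemma smooth_onE n U f : smooth_on n U f <-> forall k, Ck_on n U k f.
Proof.
  split.
  - intros H k l Hl _. exact (H l Hl).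
  - intros H l Hl. exact (H (length l) l Hl (le_n _)).
Qed.

Lemma cont_partials_local n U f g : open_n n U -> eq_on U f g -> cont_partials n U f -> cont_partials n U g.
Proof.
  intros Hop H [Hc Hd]. split; [exact (cont_on_local n U f g H Hc)|].
  intros i x Hi Hx. destruct (Hd i x Hi Hx) as [l Hl]. exists l.
  destruct (open_upd n U x i Hop Hx) as [r [Hr Hr']].
  apply derivable_pt_lim_local with (1 := Hr) (3 := Hl). intros; apply H; auto.
Qed.

Lemma cont_partials_pd n U f i x : cont_partials n U f -> (i < n)%nat -> U x ->
  derivable_pt_lim (fun t => f (upd x i t)) (x i) (pd i f x).
Proof. intros [_ H] Hi Hx. apply pd_spec. now apply H. Qed.

Lemma cont_partials_const n U c : cont_partials n U (fun _ => c).
Proof. split; [apply cont_on_const|]. intros. exists 0. apply derivable_pt_lim_const. Qed.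

Lemma cont_partials_coord n U j : (j < n)%nat -> cont_partials n U (fun y => y j).
Proof.
  intros Hj. split; [now apply cont_on_coord|].
  intros i x Hi Hx. eexists. apply derivable_pt_lim_upd.
Qed.

Lemma Ck_on_local n U k f g : open_n n U -> eq_on U f g -> Ck_on n U k f -> Ck_on n U k g.
Proof.
  intros Hop H Hf l Hl Hlen. apply (cont_partials_local n U (iter_pd l f)); auto.
  now apply (iter_pd_local n).
Qed.

Lemma Ck_on_cont_partials n U k f : Ck_on n U k f -> cont_partials n U f.
Proof. intro H. apply (H nil); simpl; [tauto|lia]. Qed.

Lemma Ck_on_0 n U f : cont_partials n U f -> Ck_on n U 0 f.
Proof. intros H l Hl Hlen. destruct l; [exact H|simpl in Hlen; lia]. Qed.

Lemma Ck_on_S n U k f :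
  cont_partials n U f -> (forall i, (i < n)%nat -> Ck_on n U k (pd i f)) -> Ck_on n U (S k) f.
Proof.
  intros HP H l. induction l as [|i l _] using rev_ind; intros Hl Hlen; simpl; auto.
  rewrite iter_pd_app. apply H.
  - apply Hl; apply in_or_app; simpl; auto.
  - intros j Hj; apply Hl; apply in_or_app; auto.
  - rewrite length_app in Hlen; simpl in Hlen; lia.
Qed.

Lemma Ck_on_pd n U k f i : (i < n)%nat -> Ck_on n U (S k) f -> Ck_on n U k (pd i f).
Proof.
  intros Hi H l Hl Hlen. rewrite <- iter_pd_app. apply H.
  - intros j Hj; apply in_app_or in Hj; destruct Hj as [Hj|[Hj|[]]]; subst; auto.
  - rewrite length_app; simpl; lia.
Qed.

Lemma Ck_on_le n U k k' f : (k' <= k)%nat -> Ck_on n U k f -> Ck_on n U k' f.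
Proof. intros Hk H l Hl Hlen; apply H; auto; lia. Qed.

Lemma Ck_on_plus n U k f g :
  open_n n U -> Ck_on n U k f -> Ck_on n U k g -> Ck_on n U k (fun x => f x + g x).
Proof.
  intro Hop. revert f g. induction k; intros f g Hf Hg;
    pose proof (Ck_on_cont_partials _ _ _ _ Hf) as [Cf Pf];
    pose proof (Ck_on_cont_partials _ _ _ _ Hg) as [Cg Pg].
  - apply Ck_on_0. split; [now apply cont_on_plus|].
    intros i x Hi Hx. destruct (Pf i x Hi Hx) as [a Ha]. destruct (Pg i x Hi Hx) as [b Hb].
    exists (a + b). now apply (derivable_pt_lim_plus (fun t => f (upd x i t)) (fun t => g (upd x i t))).
  - assert (D : forall i x, (i < n)%nat -> U x ->
      derivable_pt_lim (fun t => f (upd x i t) + g (upd x i t)) (x i) (pd i f x + pd i g x)).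
    { intros i x Hi Hx. apply (derivable_pt_lim_plus (fun t => f (upd x i t)) (fun t => g (upd x i t)));
        apply cont_partials_pd with n U; auto; split; auto. }
    apply Ck_on_S.
    + split; [now apply cont_on_plus|]. intros i x Hi Hx. eexists. now apply D.
    + intros i Hi. apply (Ck_on_local n U k (fun x => pd i f x + pd i g x)); auto.
      * intros x Hx. symmetry. apply pd_eq. now apply D.
      * apply IHk; apply Ck_on_pd; auto.
Qed.

Lemma Ck_on_mult n U k f g :
  open_n n U -> Ck_on n U k f -> Ck_on n U k g -> Ck_on n U k (fun x => f x * g x).
Proof.
  intro Hop. revert f g. induction k; intros f g Hf Hg;
    pose proof (Ck_on_cont_partials _ _ _ _ Hf) as [Cf Pf];
    pose proof (Ck_on_cont_partials _ _ _ _ Hg) as [Cg Pg].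
  - apply Ck_on_0. split; [now apply cont_on_mult|].
    intros i x Hi Hx. destruct (Pf i x Hi Hx) as [a Ha]. destruct (Pg i x Hi Hx) as [b Hb].
    eexists. exact (derivable_pt_lim_mult (fun t => f (upd x i t)) (fun t => g (upd x i t)) _ _ _ Ha Hb).
  - assert (D : forall i x, (i < n)%nat -> U x ->
      derivable_pt_lim (fun t => f (upd x i t) * g (upd x i t)) (x i)
        (pd i f x * g x + f x * pd i g x)).
    { intros i x Hi Hx. rewrite <- (upd_id x i) at 3 4.
      apply (derivable_pt_lim_mult (fun t => f (upd x i t)) (fun t => g (upd x i t)));
        apply cont_partials_pd with n U; auto; split; auto. }
    apply Ck_on_S.
    + split; [now apply cont_on_mult|]. intros i x Hi Hx. eexists. now apply D.
    + intros i Hi. apply (Ck_on_local n U k (fun x => pd i f x * g x + f x * pd i g x)); auto.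
      * intros x Hx. symmetry. apply pd_eq. now apply D.
      * apply Ck_on_plus; auto; apply IHk; try (apply Ck_on_pd; auto);
          apply (Ck_on_le _ _ (S k)); auto.
Qed.

Lemma Ck_on_sumn n U k m G : open_n n U -> (forall j, (j < m)%nat -> Ck_on n U k (G j)) ->
  Ck_on n U k (fun x => sumn m (fun j => G j x)).
Proof.
  intros Hop. induction m; intros H.
  - apply (Ck_on_local n U k (fun _ => 0)); auto; [intros x _; now rewrite sumn_0|].
    clear H. revert k. induction k.
    + apply Ck_on_0, cont_partials_const.
    + apply Ck_on_S; [apply cont_partials_const|]. intros i Hi.
      apply (Ck_on_local n U k (fun _ => 0)); auto. intros x _. now rewrite pd_const.
  - apply (Ck_on_local n U k (fun x => sumn m (fun j => G j x) + G m x)); auto.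
    + intros x _. now rewrite sumn_S.
    + apply Ck_on_plus; auto.
Qed.

(** * The chain rule *)

Definition staircase (q p : Vec) (j : nat) : Vec := fun i => if Nat.ltb i j then q i else p i.

Lemma staircase_S q p j : staircase q p (S j) = upd (staircase q p j) j (q j).
Proof.
  apply functional_extensionality; intro i; unfold staircase, upd.
  destruct (Nat.eqb_spec i j).
  - subst. now rewrite (proj2 (Nat.ltb_lt j (S j))) by lia.
  - destruct (Nat.ltb_spec i (S j)); destruct (Nat.ltb_spec i j); auto; lia.
Qed.

Lemma derivable_pt_lim_lipschitz (c : R -> R) t0 l : derivable_pt_lim c t0 l ->
  exists d, 0 < d /\ forall h, Rabs h < d -> Rabs (c (t0 + h) - c t0) <= (Rabs l + 1) * Rabs h.
Proof.
  intros Hc. destruct (Hc 1 ltac:(lra)) as [d Hd]. exists d. split; [apply cond_pos|].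
  intros h Hh. destruct (Req_dec h 0) as [H0|H0].
  - subst. rewrite Rplus_0_r. replace (c t0 - c t0) with 0 by ring. rewrite Rabs_R0, Rmult_0_r. lra.
  - pose proof (Hd h H0 Hh) as H.
    assert (Hh0 : 0 < Rabs h) by (apply Rabs_pos_lt; auto).
    replace (c (t0 + h) - c t0) with (((c (t0 + h) - c t0) / h - l) * h + l * h) by (field; auto).
    eapply Rle_trans; [apply Rabs_triang|]. rewrite !Rabs_mult.
    assert (Rabs ((c (t0 + h) - c t0) / h - l) * Rabs h <= 1 * Rabs h) by (apply Rmult_le_compat_r; lra).
    lra.
Qed.

Section ChainRule.
Variables (n : nat) (V : Vec -> Prop) (F : Vec -> R).
Hypothesis HV : open_n n V.
Hypothesis HF : Ck_on n V 1 F.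

Lemma C1_pd k y : (k < n)%nat -> V y ->
  derivable_pt_lim (fun s => F (upd y k s)) (y k) (pd k F y).
Proof. intros. apply cont_partials_pd with n V; auto. now apply Ck_on_cont_partials with 1%nat. Qed.

Lemma C1_cont_pd k : (k < n)%nat -> cont_on n V (pd k F).
Proof. intros. apply (Ck_on_cont_partials n V 0). now apply Ck_on_pd. Qed.

Lemma staircase_step p q j r d eps : (j < n)%nat ->
  (forall y, distn n y p < r -> V y) ->
  (forall y, V y -> distn n y p < d -> Rabs (pd j F y - pd j F p) < eps) ->
  distn n q p < r -> distn n q p < d ->
  Rabs (F (staircase q p (S j)) - F (staircase q p j) - pd j F p * (q j - p j))
    <= eps * Rabs (q j - p j).
Proof.
  intros Hj Hr Hd Hqr Hqd. set (z := staircase q p j).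
  assert (Hzj : z j = p j) by (unfold z, staircase; now rewrite Nat.ltb_irrefl).
  assert (Hseg : forall s, Rmin (p j) (q j) <= s <= Rmax (p j) (q j) ->
            distn n (upd z j s) p <= distn n q p).
  { intros s Hs. apply distn_le_coords. intros i Hi. unfold upd, z, staircase.
    destruct (Nat.eqb_spec i j); [subst; now apply Rabs_between|].
    destruct (Nat.ltb_spec i j); [lra|].
    replace (p i - p i) with 0 by ring; rewrite Rabs_R0; apply Rabs_pos. }
  destruct (MVT_unordered (fun s => F (upd z j s)) (fun s => pd j F (upd z j s)) (p j) (q j))
    as [c [Hc Hmvt]].
  { intros c Hc. pose proof (Hseg c Hc) as Hcq.
    pose proof (C1_pd j (upd z j c) Hj ltac:(apply Hr; lra)) as Hder.
    rewrite upd_same in Hder. eapply derivable_pt_lim_ext; [|exact Hder]. intro t; cbv beta; now rewrite upd_upd. }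
  rewrite staircase_S. fold z. rewrite <- Hzj in Hmvt at 1. rewrite upd_id in Hmvt. rewrite Hmvt.
  pose proof (Hseg c Hc) as Hcq.
  assert (Hpd : Rabs (pd j F (upd z j c) - pd j F p) < eps) by (apply Hd; [apply Hr|]; lra).
  replace (pd j F (upd z j c) * (q j - p j) - pd j F p * (q j - p j))
    with ((pd j F (upd z j c) - pd j F p) * (q j - p j)) by ring.
  rewrite Rabs_mult. apply Rmult_le_compat_r; [apply Rabs_pos|lra].
Qed.

Lemma first_order_expansion p : V p -> forall eps, 0 < eps ->
  exists d, 0 < d /\ forall q, (forall j, (n <= j)%nat -> q j = p j) -> distn n q p < d ->
    Rabs (F q - F p - sumn n (fun k => pd k F p * (q k - p k))) <= eps * distn n q p.
Proof.
  intros Hp eps He.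
  destruct (HV p Hp) as [r [Hr HrV]].
  destruct (finite_delta n
      (fun k d => forall y, V y -> distn n y p < d -> Rabs (pd k F y - pd k F p) < eps))
    as [d [Hd Hd']].
  { intros k d d' H [H1 H2] y Hy Hyd. apply H; auto; lra. }
  { intros k Hk. destruct (C1_cont_pd k Hk p Hp eps He) as [d [Hd Hd']]. exists d; split; auto. }
  exists (Rmin r d). split; [apply Rmin_pos; auto|].
  intros q Hq Hqd.
  pose proof (Rlt_le_trans _ _ _ Hqd (Rmin_l _ _)) as Hqr.
  pose proof (Rlt_le_trans _ _ _ Hqd (Rmin_r _ _)) as Hqd'.
  assert (Hsum : forall j, (j <= n)%nat ->
    Rabs (F (staircase q p j) - F p - sumn j (fun k => pd k F p * (q k - p k)))
      <= eps * sumn j (fun k => Rabs (q k - p k))).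
  { induction j; intros Hj.
    - replace (staircase q p 0) with p by (apply functional_extensionality; reflexivity).
      rewrite !sumn_0. replace (F p - F p - 0) with 0 by ring. rewrite Rabs_R0; lra.
    - pose proof (staircase_step p q j r d eps ltac:(lia) HrV (fun k => Hd' j ltac:(lia) k) Hqr Hqd').
      pose proof (IHj ltac:(lia)).
      rewrite !sumn_S.
      match goal with |- Rabs ?e <= _ =>
        replace e with ((F (staircase q p j) - F p - sumn j (fun k => pd k F p * (q k - p k))) +
          (F (staircase q p (S j)) - F (staircase q p j) - pd j F p * (q j - p j))) by ring end.
      eapply Rle_trans; [apply Rabs_triang|]. lra. }
  assert (Hn : staircase q p n = q).
  { apply functional_extensionality; intro i; unfold staircase.
    destruct (Nat.ltb_spec i n); auto. symmetry; apply Hq; lia. }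
  pose proof (Hsum n (le_n n)) as H. now rewrite Hn in H.
Qed.

Section Curve.
Variables (c : R -> Vec) (t0 : R) (dc : nat -> R).
Hypothesis Hc0 : V (c t0).
Hypothesis Hconst : forall t j, (n <= j)%nat -> c t j = c t0 j.
Hypothesis Hdc : forall k, (k < n)%nat -> derivable_pt_lim (fun t => c t k) t0 (dc k).

Let lin (t : R) : R := sumn n (fun k => pd k F (c t0) * (c t k - c t0 k)).

Lemma chain_rule_remainder : derivable_pt_lim (fun t => F (c t) - lin t) t0 0.
Proof.
  intros eps He. set (p := c t0) in *.
  destruct (finite_delta n
      (fun k d => forall h, Rabs h < d -> Rabs (c (t0 + h) k - p k) <= (Rabs (dc k) + 1) * Rabs h))
    as [d1 [Hd1 Hd1']].
  { intros k d d' H [H1 H2] h Hh. apply H; lra. }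
  { intros k Hk. exact (derivable_pt_lim_lipschitz (fun t => c t k) t0 (dc k) (Hdc k Hk)). }
  set (K := sumn n (fun k => Rabs (dc k) + 1) + 1).
  assert (HK : 1 <= K).
  { unfold K. assert (0 <= sumn n (fun k => Rabs (dc k) + 1)); [|lra].
    apply sumn_nonneg; intros; pose proof (Rabs_pos (dc i)); lra. }
  destruct (first_order_expansion p Hc0 (eps / (2 * K)) ltac:(apply Rdiv_lt_0_compat; lra))
    as [d2 [Hd2 Hd2']].
  assert (Hdm : 0 < Rmin d1 (d2 / K)) by (apply Rmin_pos; [lra| apply Rdiv_lt_0_compat; lra]).
  exists (mkposreal _ Hdm). intros h Hh0 Hh. simpl in Hh.
  pose proof (Rlt_le_trans _ _ _ Hh (Rmin_l _ _)) as Hh1.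
  pose proof (Rlt_le_trans _ _ _ Hh (Rmin_r _ _)) as Hh2.
  assert (Hhp : 0 < Rabs h) by (apply Rabs_pos_lt; auto).
  assert (Hdist : distn n (c (t0 + h)) p <= K * Rabs h).
  { unfold distn. apply Rle_trans with (sumn n (fun k => (Rabs (dc k) + 1) * Rabs h)).
    - apply sumn_le; intros; apply Hd1'; auto.
    - rewrite sumn_scal_r. unfold K. apply Rmult_le_compat_r; [apply Rabs_pos|lra]. }
  assert (Hdist2 : distn n (c (t0 + h)) p < d2).
  { apply Rle_lt_trans with (K * Rabs h); auto.
    apply (Rmult_lt_compat_l K) in Hh2; [|lra].
    replace (K * (d2 / K)) with d2 in Hh2 by (field; lra). lra. }
  pose proof (Hd2' (c (t0 + h)) (fun j Hj => Hconst (t0 + h) j Hj) Hdist2) as Hexp.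
  replace (F (c (t0 + h)) - lin (t0 + h) - (F p - lin t0))
    with (F (c (t0 + h)) - F p - sumn n (fun k => pd k F p * (c (t0 + h) k - p k))).
  2:{ unfold lin. fold p. rewrite (sumn_zero n (fun k => pd k F p * (p k - p k))); [ring|].
      intros; ring. }
  rewrite Rminus_0_r. unfold Rdiv. rewrite Rabs_mult, Rabs_inv.
  apply Rle_lt_trans with ((eps / (2 * K)) * (K * Rabs h) * / Rabs h).
  - apply Rmult_le_compat_r; [left; apply Rinv_0_lt_compat; auto|].
    eapply Rle_trans; [exact Hexp|]. apply Rmult_le_compat_l; auto.
    left; apply Rdiv_lt_0_compat; lra.
  - replace (eps / (2 * K) * (K * Rabs h) * / Rabs h) with (eps / 2) by (field; lra). lra.
Qed.

Lemma chain_rule :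
  derivable_pt_lim (fun t => F (c t)) t0 (sumn n (fun k => pd k F (c t0) * dc k)).
Proof.
  assert (Hlin : derivable_pt_lim lin t0 (sumn n (fun k => pd k F (c t0) * dc k))).
  { apply derivable_pt_lim_sumn. intros k Hk.
    apply (derivable_pt_lim_value _ _ (0 * (c t0 k - c t0 k) + pd k F (c t0) * (dc k - 0))); [|ring].
    apply (derivable_pt_lim_mult (fun _ => pd k F (c t0)) (fun t => c t k - c t0 k)).
    - apply derivable_pt_lim_const.
    - apply (derivable_pt_lim_minus (fun t => c t k) (fun _ => c t0 k)); auto.
      apply derivable_pt_lim_const. }
  apply (derivable_pt_lim_ext (fun t => lin t + (F (c t) - lin t))); [intro; ring|].
  apply (derivable_pt_lim_value _ _ (sumn n (fun k => pd k F (c t0) * dc k) + 0)); [|ring].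
  apply derivable_pt_lim_plus; auto. apply chain_rule_remainder.
Qed.

End Curve.

End ChainRule.

Lemma smooth_on_local n U f g : open_n n U -> eq_on U f g -> smooth_on n U f -> smooth_on n U g.
Proof. intros Hop H Hf. apply smooth_onE; intro k. eapply Ck_on_local; eauto. now apply smooth_onE. Qed.

Lemma smooth_on_const n U c : smooth_on n U (fun _ => c).
Proof.
  apply smooth_onE. intro k. revert c. induction k; intro c.
  - apply Ck_on_0, cont_partials_const.
  - apply Ck_on_S; [apply cont_partials_const|]. intros i Hi.
    replace (pd i (fun _ => c)) with (fun _ : Vec => 0); [apply IHk|].
    apply functional_extensionality; intro; now rewrite pd_const.
Qed.

Lemma smooth_on_coord n U j : (j < n)%nat -> smooth_on n U (fun y => y j).
Proof.
  intros Hj. apply smooth_onE. intros [|k].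
  - apply Ck_on_0, cont_partials_coord; auto.
  - apply Ck_on_S; [apply cont_partials_coord; auto|]. intros i Hi.
    replace (pd i (fun y => y j)) with (fun _ : Vec => if Nat.eqb j i then 1 else 0).
    + apply smooth_onE, smooth_on_const.
    + apply functional_extensionality; intro; now rewrite pd_coord.
Qed.

Lemma smooth_on_plus n U f g :
  open_n n U -> smooth_on n U f -> smooth_on n U g -> smooth_on n U (fun x => f x + g x).
Proof. intros Hop Hf Hg. apply smooth_onE; intro k. apply Ck_on_plus; auto; now apply smooth_onE. Qed.

Lemma smooth_on_mult n U f g :
  open_n n U -> smooth_on n U f -> smooth_on n U g -> smooth_on n U (fun x => f x * g x).
Proof. intros Hop Hf Hg. apply smooth_onE; intro k. apply Ck_on_mult; auto; now apply smooth_onE. Qed.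

Lemma smooth_on_pd n U f i : (i < n)%nat -> smooth_on n U f -> smooth_on n U (pd i f).
Proof. intros Hi H. apply smooth_onE. intro k. apply Ck_on_pd; auto. now apply smooth_onE. Qed.

Lemma smooth_on_cont_partials n U f : smooth_on n U f -> cont_partials n U f.
Proof. intro H. apply (Ck_on_cont_partials n U 0). now apply smooth_onE. Qed.

Lemma smooth_on_C1 n U f : smooth_on n U f -> Ck_on n U 1 f.
Proof. intro H. now apply smooth_onE. Qed.

Section Composition.
Variables (m n : nat) (U V : Vec -> Prop) (phi : Vec -> Vec).
Hypothesis HU : open_n m U.
Hypothesis HV : open_n n V.
Hypothesis Hphi : forall j, (j < n)%nat -> smooth_on m U (fun y => phi y j).
Hypothesis HUV : forall y, U y -> V (phi y).
Hypothesis Hphi0 : forall y j, (n <= j)%nat -> phi y j = 0.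

Lemma cont_on_comp F : cont_on n V F -> cont_on m U (fun y => F (phi y)).
Proof.
  intros HF x Hx eps He.
  destruct (HF (phi x) (HUV x Hx) eps He) as [dF [HdF HdF']].
  assert (Hpos : 0 < dF / (INR n + 1)) by (apply Rdiv_lt_0_compat; [lra| pose proof (pos_INR n); lra]).
  destruct (finite_delta n (fun j d => forall y, U y -> distn m y x < d ->
                                   Rabs (phi y j - phi x j) < dF / (INR n + 1)))
    as [d [Hd Hd']].
  { intros j d d' H [H1 H2] y Hy Hyd. apply H; auto; lra. }
  { intros j Hj. destruct (proj1 (smooth_on_cont_partials _ _ _ (Hphi j Hj)) x Hx _ Hpos)
      as [d [Hd Hd']].
    exists d; split; auto. }
  exists d. split; auto. intros y Hy Hyx. apply HdF'; auto.
  unfold distn. apply Rle_lt_trans with (sumn n (fun _ => dF / (INR n + 1))).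
  - apply sumn_le; intros; left; apply Hd'; auto.
  - rewrite sumn_const. pose proof (pos_INR n).
    apply Rmult_lt_reg_r with (INR n + 1); [lra|].
    replace (INR n * (dF / (INR n + 1)) * (INR n + 1)) with (INR n * dF) by (field; lra). nra.
Qed.

Lemma derivable_pt_lim_comp_upd F i x : Ck_on n V 1 F -> (i < m)%nat -> U x ->
  derivable_pt_lim (fun t => F (phi (upd x i t))) (x i)
    (sumn n (fun k => pd k F (phi x) * pd i (fun y => phi y k) x)).
Proof.
  intros HF Hi Hx.
  pose proof (chain_rule n V F HV HF (fun t => phi (upd x i t)) (x i)
                (fun k => pd i (fun y => phi y k) x)) as H.
  cbv beta in H. rewrite upd_id in H. apply H; auto.
  - intros t j Hj. rewrite !Hphi0; auto.
  - intros k Hk. apply (cont_partials_pd m U (fun y => phi y k)); auto.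
    now apply smooth_on_cont_partials, Hphi.
Qed.

Lemma pd_comp F i x : Ck_on n V 1 F -> (i < m)%nat -> U x ->
  pd i (fun y => F (phi y)) x = sumn n (fun k => pd k F (phi x) * pd i (fun y => phi y k) x).
Proof. intros; apply pd_eq; now apply derivable_pt_lim_comp_upd. Qed.

Lemma cont_partials_comp F : Ck_on n V 1 F -> cont_partials m U (fun y => F (phi y)).
Proof.
  intros HF. split.
  - apply cont_on_comp. apply (Ck_on_cont_partials _ _ _ _ HF).
  - intros i x Hi Hx. eexists. now apply derivable_pt_lim_comp_upd.
Qed.

Lemma Ck_on_comp k : forall F, Ck_on n V (S k) F -> Ck_on m U k (fun y => F (phi y)).
Proof.
  induction k; intros F HF.
  - apply Ck_on_0, cont_partials_comp; auto.
  - apply Ck_on_S.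
    + apply cont_partials_comp. apply (Ck_on_le _ _ (S (S k))); auto; lia.
    + intros i Hi.
      apply (Ck_on_local m U k (fun y => sumn n (fun j => pd j F (phi y) * pd i (fun y => phi y j) y)));
        auto.
      * intros x Hx. symmetry. apply pd_comp; auto. apply (Ck_on_le _ _ (S (S k))); auto; lia.
      * apply Ck_on_sumn; auto. intros j Hj. apply Ck_on_mult; auto.
        -- apply IHk. now apply Ck_on_pd.
        -- apply smooth_onE. apply smooth_on_pd; auto.
Qed.

Lemma smooth_on_comp F : smooth_on n V F -> smooth_on m U (fun y => F (phi y)).
Proof. intros HF. apply smooth_onE; intro k. apply Ck_on_comp. now apply smooth_onE. Qed.

End Composition.

Definition nonzero0 : Vec -> Prop := fun z => z 0%nat <> 0.

Lemma open_nonzero0 : open_n 1 nonzero0.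
Proof.
  intros x Hx. exists (Rabs (x 0%nat)). split; [now apply Rabs_pos_lt|].
  intros y Hy. unfold distn in Hy. rewrite sumn_S, sumn_0 in Hy. unfold nonzero0 in *.
  intro H. rewrite H in Hy. replace (0 - x 0%nat) with (- x 0%nat) in Hy by ring.
  rewrite Rabs_Ropp in Hy. lra.
Qed.

Lemma derivable_pt_lim_inv_pow a p t0 : t0 <> 0 ->
  derivable_pt_lim (fun t => a * (/ t) ^ p) t0 (- a * INR p * (/ t0) ^ (S p)).
Proof.
  intros Ht.
  assert (Hinv : derivable_pt_lim (fun t => / t) t0 (- (/ t0) ^ 2)).
  { pose proof (derivable_pt_lim_div (fun _ => 1) (fun t => t) t0 0 1
                  (derivable_pt_lim_const 1 t0) (derivable_pt_lim_id t0) Ht) as H.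
    eapply derivable_pt_lim_ext; [|eapply derivable_pt_lim_value; [exact H|]].
    - intro t. unfold div_fct. unfold Rdiv; ring.
    - unfold Rsqr. simpl. field; auto. }
  pose proof (derivable_pt_lim_comp (fun t => / t) (fun u => u ^ p) t0 _ _ Hinv
                (derivable_pt_lim_pow (/ t0) p)) as H.
  pose proof (derivable_pt_lim_mult (fun _ => a) _ t0 0 _ (derivable_pt_lim_const a t0) H) as H2.
  eapply derivable_pt_lim_value; [exact H2|].
  unfold comp. destruct p; [simpl; ring|]. rewrite S_INR. simpl pred. simpl. field. auto.
Qed.

Lemma cont_on_inv : cont_on 1 nonzero0 (fun z => / z 0%nat).
Proof.
  intros x Hx eps He. unfold nonzero0 in Hx. set (a := Rabs (x 0%nat)).
  assert (Ha : 0 < a) by (apply Rabs_pos_lt; auto).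
  exists (Rmin (a/2) (eps * a * a / 2)). split.
  { apply Rmin_pos; [lra|]. apply Rdiv_lt_0_compat; [|lra].
    apply Rmult_lt_0_compat; [apply Rmult_lt_0_compat|]; lra. }
  intros y Hy Hyx. unfold distn in Hyx. rewrite sumn_S, sumn_0, Rplus_0_l in Hyx.
  pose proof (Rlt_le_trans _ _ _ Hyx (Rmin_l _ _)) as H1.
  pose proof (Rlt_le_trans _ _ _ Hyx (Rmin_r _ _)) as H2.
  assert (Hy0 : a / 2 <= Rabs (y 0%nat)).
  { pose proof (Rabs_triang_inv (x 0%nat) (x 0%nat - y 0%nat)) as H.
    replace (x 0%nat - (x 0%nat - y 0%nat)) with (y 0%nat) in H by ring.
    rewrite Rabs_minus_sym in H. fold a in H. lra. }
  assert (Hyn : y 0%nat <> 0) by (intro E; rewrite E, Rabs_R0 in Hy0; lra).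
  replace (/ y 0%nat - / x 0%nat) with ((x 0%nat - y 0%nat) * / (y 0%nat * x 0%nat))
    by (field; auto).
  rewrite Rabs_mult, Rabs_inv, Rabs_mult, Rabs_minus_sym. fold a.
  apply Rle_lt_trans with (Rabs (y 0%nat - x 0%nat) * / (a / 2 * a)).
  - apply Rmult_le_compat_l; [apply Rabs_pos|]. apply Rinv_le_contravar.
    + apply Rmult_lt_0_compat; lra.
    + apply Rmult_le_compat_r; lra.
  - apply Rlt_le_trans with ((eps * a * a / 2) * / (a / 2 * a)).
    + apply Rmult_lt_compat_r; auto. apply Rinv_0_lt_compat, Rmult_lt_0_compat; lra.
    + right. field. lra.
Qed.

Lemma smooth_on_inv : smooth_on 1 nonzero0 (fun z => / z 0%nat).
Proof.
  (* every iterated derivative is of the form [z |-> a * (/ z 0) ^ p] *)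
  set (Q := fun f => exists a p, eq_on nonzero0 f (fun z => a * (/ z 0%nat) ^ p)).
  assert (Hcont : forall a p, cont_on 1 nonzero0 (fun z => a * (/ z 0%nat) ^ p)).
  { intros a p. apply cont_on_mult; [apply cont_on_const|]. induction p; simpl.
    - apply cont_on_const.
    - apply cont_on_mult; auto. apply cont_on_inv. }
  assert (HQpd : forall f, Q f -> Q (pd 0 f) /\ cont_partials 1 nonzero0 f).
  { intros f [a [p Hf]].
    assert (Hd : forall x, nonzero0 x -> derivable_pt_lim (fun t => f (upd x 0 t)) (x 0%nat)
                                       (- a * INR p * (/ x 0%nat) ^ (S p))).
    { intros x Hx. destruct (open_upd 1 nonzero0 x 0 open_nonzero0 Hx) as [r [Hr Hr']].
      apply derivable_pt_lim_local with (1 := Hr) (3 := derivable_pt_lim_inv_pow a p _ Hx).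
      intros t Ht. rewrite Hf by auto. now rewrite upd_same. }
    split.
    - exists (- a * INR p), (S p). intros x Hx. apply pd_eq. now apply Hd.
    - split.
      + exact (cont_on_local 1 nonzero0 _ f (fun x Hx => eq_sym (Hf x Hx)) (Hcont a p)).
      + intros i x Hi Hx. assert (i = 0%nat) by lia. subst. eexists; now apply Hd. }
  intros l Hl. enough (Q (iter_pd l (fun z => / z 0%nat))) by (now apply HQpd).
  induction l as [|i l IH]; simpl.
  - exists 1, 1%nat. intros x _. simpl. ring.
  - assert (i = 0%nat) by (specialize (Hl i (or_introl eq_refl)); lia). subst.
    apply HQpd. apply IH. intros j Hj; apply Hl; simpl; auto.
Qed.

(** * Symmetry of second derivatives *)

Lemma mixed_difference_mvt (G Gs Gst : R -> R -> R) a b h : 0 < h ->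
  (forall s t, a <= s <= a + h -> b <= t <= b + h -> derivable_pt_lim (fun u => G u t) s (Gs s t)) ->
  (forall s t, a <= s <= a + h -> b <= t <= b + h -> derivable_pt_lim (fun u => Gs s u) t (Gst s t)) ->
  exists s t, a <= s <= a + h /\ b <= t <= b + h /\
    G (a + h) (b + h) - G (a + h) b - G a (b + h) + G a b = Gst s t * h * h.
Proof.
  intros Hh Ds Dt.
  destruct (MVT_cor2 (fun s => G s (b + h) - G s b) (fun s => Gs s (b + h) - Gs s b) a (a + h))
    as [s [Es Hs]]; [lra| |].
  { intros c Hc. apply derivable_pt_lim_minus; apply Ds; lra. }
  destruct (MVT_cor2 (fun t => Gs s t) (fun t => Gst s t) b (b + h)) as [t [Et Ht]]; [lra| |].
  { intros c Hc. apply Dt; lra. }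
  exists s, t. split; [lra|]. split; [lra|].
  replace (a + h - a) with h in Es by ring. replace (b + h - b) with h in Et by ring.
  rewrite Et in Es. lra.
Qed.

(** The mixed second difference of [f] near [x] computes both mixed partials. *)
Lemma mixed_pd_meet n U f i k x : open_n n U -> U x -> (i < n)%nat -> (k < n)%nat -> i <> k ->
  Ck_on n U 2 f -> forall d, 0 < d ->
  exists p q, U p /\ U q /\ distn n p x < d /\ distn n q x < d /\
    pd k (pd i f) p = pd i (pd k f) q.
Proof.
  intros Hop Hx Hi Hk Hik Hf d Hd.
  assert (P : forall g, Ck_on n U 0 g -> cont_partials n U g)
    by (intros; now apply Ck_on_cont_partials with 0%nat).
  pose proof (P f (Ck_on_le _ _ 2 0 _ ltac:(lia) Hf)) as Pf.
  pose proof (P _ (Ck_on_pd _ _ _ _ _ Hi (Ck_on_le _ _ 2 1 _ ltac:(lia) Hf))) as Pi.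
  pose proof (P _ (Ck_on_pd _ _ _ _ _ Hk (Ck_on_le _ _ 2 1 _ ltac:(lia) Hf))) as Pk.
  set (y := fun s t => upd (upd x i s) k t).
  assert (Hyi : forall s t, y s t i = s) by (intros; unfold y; rewrite upd_other, upd_same; auto).
  assert (Hyk : forall s t, y s t k = t) by (intros; unfold y; now rewrite upd_same).
  destruct (Hop x Hx) as [r [Hr Hr']].
  set (h := Rmin r d / 4).
  assert (Hh : 0 < h) by (unfold h; apply Rdiv_lt_0_compat; [apply Rmin_pos|]; lra).
  assert (Hh' : 2 * h < r /\ 2 * h < d).
  { unfold h. pose proof (Rmin_l r d). pose proof (Rmin_r r d). lra. }
  set (Box := fun s t => x i <= s <= x i + h /\ x k <= t <= x k + h).
  assert (Hdist : forall s t, Box s t -> distn n (y s t) x < d /\ U (y s t)).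
  { intros s t [Hs Ht]. assert (distn n (y s t) x <= 2 * h); [|split; [lra|apply Hr'; lra]].
    unfold y. eapply Rle_trans; [apply distn_upd2|]. rewrite !Rabs_right by lra. lra. }
  assert (Ds : forall g s t, cont_partials n U g -> Box s t ->
            derivable_pt_lim (fun u => g (y u t)) s (pd i g (y s t))).
  { intros g s t Pg Hst. pose proof (cont_partials_pd n U g i (y s t) Pg Hi (proj2 (Hdist s t Hst))) as H.
    rewrite Hyi in H. eapply derivable_pt_lim_ext; [|exact H]. intro u. cbv beta. unfold y.
    now rewrite upd_upd_upd. }
  assert (Dt : forall g s t, cont_partials n U g -> Box s t ->
            derivable_pt_lim (fun u => g (y s u)) t (pd k g (y s t))).
  { intros g s t Pg Hst. pose proof (cont_partials_pd n U g k (y s t) Pg Hk (proj2 (Hdist s t Hst))) as H.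
    rewrite Hyk in H. eapply derivable_pt_lim_ext; [|exact H]. intro u. cbv beta. unfold y.
    now rewrite upd_upd. }
  destruct (mixed_difference_mvt (fun s t => f (y s t)) (fun s t => pd i f (y s t))
              (fun s t => pd k (pd i f) (y s t)) (x i) (x k) h Hh) as [s1 [t1 [Hs1 [Ht1 E1]]]].
  { intros s t Hs Ht. apply Ds; auto. split; auto. }
  { intros s t Hs Ht. apply Dt; auto. split; auto. }
  destruct (mixed_difference_mvt (fun t s => f (y s t)) (fun t s => pd k f (y s t))
              (fun t s => pd i (pd k f) (y s t)) (x k) (x i) h Hh) as [t2 [s2 [Ht2 [Hs2 E2]]]].
  { intros t s Ht Hs. apply Dt; auto. split; auto. }
  { intros t s Ht Hs. apply Ds; auto. split; auto. }
  destruct (Hdist s1 t1 (conj Hs1 Ht1)), (Hdist s2 t2 (conj Hs2 Ht2)).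
  exists (y s1 t1), (y s2 t2). repeat split; auto.
  apply Rmult_eq_reg_r with (h * h); [|nra]. rewrite <- !Rmult_assoc. lra.
Qed.

Lemma pd_comm n U f i k x : open_n n U -> U x -> (i < n)%nat -> (k < n)%nat -> Ck_on n U 2 f ->
  pd k (pd i f) x = pd i (pd k f) x.
Proof.
  intros Hop Hx Hi Hk Hf.
  destruct (Nat.eq_dec i k) as [->|Hik]; [reflexivity|].
  assert (C : forall a b, (a < n)%nat -> (b < n)%nat -> cont_on n U (pd a (pd b f))).
  { intros a b Ha Hb. apply (Ck_on_cont_partials n U 0). now apply Ck_on_pd, Ck_on_pd. }
  apply cond_eq. intros eps He.
  destruct (C k i Hk Hi x Hx (eps / 2) ltac:(lra)) as [dA [HdA HdA']].
  destruct (C i k Hi Hk x Hx (eps / 2) ltac:(lra)) as [dB [HdB HdB']].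
  destruct (mixed_pd_meet n U f i k x Hop Hx Hi Hk Hik Hf (Rmin dA dB) ltac:(now apply Rmin_pos))
    as [p [q [Hp [Hq [Hpx [Hqx E]]]]]].
  pose proof (HdA' p Hp (Rlt_le_trans _ _ _ Hpx (Rmin_l _ _))) as HA.
  pose proof (HdB' q Hq (Rlt_le_trans _ _ _ Hqx (Rmin_r _ _))) as HB.
  rewrite E in HA.
  replace (pd k (pd i f) x - pd i (pd k f) x)
    with (- (pd i (pd k f) q - pd k (pd i f) x) + (pd i (pd k f) q - pd i (pd k f) x)) by ring.
  eapply Rle_lt_trans; [apply Rabs_triang|]. rewrite Rabs_Ropp. lra.
Qed.

(** * The Jacobiator of a skew-symmetric structure matrix *)

Section SumReindex.
Variables (N : nat) (Phi : nat -> nat -> nat -> nat -> R).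
Notation Sum := (sumn N).

Lemma sumn4_xzwy : Sum (fun x => Sum (fun y => Sum (fun z => Sum (fun w => Phi x y z w)))) =
                   Sum (fun x => Sum (fun z => Sum (fun w => Sum (fun y => Phi x y z w)))).
Proof. apply sumn_ext; intros x _. rewrite sumn_swap. apply sumn_ext; intros z _. apply sumn_swap. Qed.

Lemma sumn4_wzxy : Sum (fun x => Sum (fun y => Sum (fun z => Sum (fun w => Phi x y z w)))) =
                   Sum (fun w => Sum (fun z => Sum (fun x => Sum (fun y => Phi x y z w)))).
Proof.
  transitivity (Sum (fun x => Sum (fun y => Sum (fun w => Sum (fun z => Phi x y z w))))).
  { apply sumn_ext; intros x _; apply sumn_ext; intros y _; apply sumn_swap. }
  transitivity (Sum (fun x => Sum (fun w => Sum (fun y => Sum (fun z => Phi x y z w))))).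
  { apply sumn_ext; intros x _; apply sumn_swap. }
  rewrite sumn_swap.
  transitivity (Sum (fun w => Sum (fun x => Sum (fun z => Sum (fun y => Phi x y z w))))).
  { apply sumn_ext; intros w _; apply sumn_ext; intros x _; apply sumn_swap. }
  apply sumn_ext; intros w _; apply sumn_swap.
Qed.

Lemma sumn4_wxzy : Sum (fun x => Sum (fun y => Sum (fun z => Sum (fun w => Phi x y z w)))) =
                   Sum (fun w => Sum (fun x => Sum (fun z => Sum (fun y => Phi x y z w)))).
Proof.
  rewrite sumn4_xzwy.
  transitivity (Sum (fun x => Sum (fun w => Sum (fun z => Sum (fun y => Phi x y z w))))).
  { apply sumn_ext; intros x _; apply sumn_swap. }
  apply sumn_swap.
Qed.

Lemma sumn4_zwxy : Sum (fun x => Sum (fun y => Sum (fun z => Sum (fun w => Phi x y z w)))) =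
                   Sum (fun z => Sum (fun w => Sum (fun x => Sum (fun y => Phi x y z w)))).
Proof. rewrite sumn4_xzwy, sumn_swap. apply sumn_ext; intros z _. apply sumn_swap. Qed.

End SumReindex.

(** [P] plays the role of the matrix [Pi] at a point, [dP k i j] of [pd k Pi_ij];
    [g], [h] are gradients and [g2], [h2] Hessians. *)
Section JacobiAlgebra.
Variables (P : nat -> nat -> R) (dP : nat -> nat -> nat -> R).
Notation Sum := (sumn 6).

Definition bform (u v : nat -> R) : R := Sum (fun a => Sum (fun k => u a * P a k * v k)).

Definition bracket_grad (g h : nat -> R) (g2 h2 : nat -> nat -> R) (k : nat) : R :=
  Sum (fun i => Sum (fun j => g2 k i * P i j * h j + g i * dP k i j * h j + g i * P i j * h2 k j)).

Definition jacobiator (a i j : nat) : R :=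
  Sum (fun k => P a k * dP k i j + P i k * dP k j a + P j k * dP k a i).

Definition hess_term_l (f h : nat -> R) (g2 : nat -> nat -> R) : R :=
  Sum (fun a => Sum (fun k => Sum (fun i => Sum (fun j => f a * P a k * g2 k i * P i j * h j)))).
Definition dP_term (f g h : nat -> R) : R :=
  Sum (fun a => Sum (fun k => Sum (fun i => Sum (fun j => f a * P a k * g i * dP k i j * h j)))).
Definition hess_term_r (f g : nat -> R) (h2 : nat -> nat -> R) : R :=
  Sum (fun a => Sum (fun k => Sum (fun i => Sum (fun j => f a * P a k * g i * P i j * h2 k j)))).

Lemma bform_bracket_grad f g h g2 h2 :
  bform f (bracket_grad g h g2 h2) = hess_term_l f h g2 + dP_term f g h + hess_term_r f g h2.
Proof.
  unfold bform, bracket_grad, hess_term_l, dP_term, hess_term_r.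
  rewrite <- !sumn_plus. apply sumn_ext; intros a _.
  rewrite <- !sumn_plus. apply sumn_ext; intros k _.
  rewrite <- sumn_scal, <- !sumn_plus. apply sumn_ext; intros i _.
  rewrite <- sumn_scal, <- !sumn_plus. apply sumn_ext; intros j _. ring.
Qed.

Hypothesis P_skew : forall a b, (a < 6)%nat -> (b < 6)%nat -> P b a = - P a b.

Lemma hess_terms_cancel (f g : nat -> R) h2 :
  (forall a b, (a < 6)%nat -> (b < 6)%nat -> h2 b a = h2 a b) ->
  hess_term_r f g h2 + hess_term_l g f h2 = 0.
Proof.
  intros Hs. unfold hess_term_r, hess_term_l.
  rewrite (sumn4_wzxy 6 (fun a k i j => g a * P a k * h2 k i * P i j * f j)).
  rewrite <- !sumn_plus. apply sumn_zero; intros a Ha.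
  rewrite <- !sumn_plus. apply sumn_zero; intros k Hk.
  rewrite <- !sumn_plus. apply sumn_zero; intros i Hi.
  rewrite <- !sumn_plus. apply sumn_zero; intros j Hj.
  rewrite (P_skew k a), (Hs j k) by auto. ring.
Qed.

Lemma dP_terms_cyclic f g h : dP_term f g h + dP_term g h f + dP_term h f g =
  Sum (fun a => Sum (fun i => Sum (fun j => f a * g i * h j * jacobiator a i j))).
Proof.
  unfold dP_term, jacobiator.
  rewrite (sumn4_xzwy 6 (fun a k i j => f a * P a k * g i * dP k i j * h j)).
  rewrite (sumn4_wxzy 6 (fun a k i j => g a * P a k * h i * dP k i j * f j)).
  rewrite (sumn4_zwxy 6 (fun a k i j => h a * P a k * f i * dP k i j * g j)).
  rewrite <- !sumn_plus. apply sumn_ext; intros a _.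
  rewrite <- !sumn_plus. apply sumn_ext; intros i _.
  rewrite <- !sumn_plus. apply sumn_ext; intros j _.
  rewrite <- !sumn_plus, <- sumn_scal. apply sumn_ext; intros k _. ring.
Qed.

(** The second-derivative terms cancel in pairs, by symmetry of the Hessians and
    skew-symmetry of [P]. *)
Lemma jacobi_sum_algebraic f g h f2 g2 h2 :
  (forall a b, (a < 6)%nat -> (b < 6)%nat -> f2 b a = f2 a b) ->
  (forall a b, (a < 6)%nat -> (b < 6)%nat -> g2 b a = g2 a b) ->
  (forall a b, (a < 6)%nat -> (b < 6)%nat -> h2 b a = h2 a b) ->
  bform f (bracket_grad g h g2 h2) + bform g (bracket_grad h f h2 f2)
    + bform h (bracket_grad f g f2 g2) =
  Sum (fun a => Sum (fun i => Sum (fun j => f a * g i * h j * jacobiator a i j))).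
Proof.
  intros Hf Hg Hh. rewrite !bform_bracket_grad.
  pose proof (hess_terms_cancel f g h2 Hh). pose proof (hess_terms_cancel g h f2 Hf).
  pose proof (hess_terms_cancel h f g2 Hg). pose proof (dP_terms_cyclic f g h). lra.
Qed.

End JacobiAlgebra.

(** [Pi_mat A G] is [Pi] with [A = M + mu] and [G = gamma], both indexed from [0]. *)
Definition Pi_mat (A G : nat -> R) (i j : nat) : R :=
  match i, j with
  | 0%nat, 1%nat => - A 2%nat | 0%nat, 2%nat => A 1%nat | 0%nat, 4%nat => - G 2%nat | 0%nat, 5%nat => G 1%nat
  | 1%nat, 0%nat => A 2%nat | 1%nat, 2%nat => - A 0%nat | 1%nat, 3%nat => G 2%nat | 1%nat, 5%nat => - G 0%nat
  | 2%nat, 0%nat => - A 1%nat | 2%nat, 1%nat => A 0%nat | 2%nat, 3%nat => - G 1%nat | 2%nat, 4%nat => G 0%nat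
  | 3%nat, 1%nat => - G 2%nat | 3%nat, 2%nat => G 1%nat
  | 4%nat, 0%nat => G 2%nat | 4%nat, 2%nat => - G 0%nat
  | 5%nat, 0%nat => - G 1%nat | 5%nat, 1%nat => G 0%nat
  | _, _ => 0
  end.

Definition mu_coord (mu : R3 -> R3 -> R3) (l : nat) (y : Vec) : R :=
  match l with
  | 0%nat => c1 (mu (vM y) (vG y))
  | 1%nat => c2 (mu (vM y) (vG y))
  | _ => c3 (mu (vM y) (vG y))
  end.

Lemma Pi_eq_Pi_mat mu y i j :
  Pi mu y i j = Pi_mat (fun l => y l + mu_coord mu l y) (fun l => y (3 + l)%nat) i j.
Proof. do 6 (destruct i as [|i]; [do 7 (destruct j as [|j]; try reflexivity)|]). reflexivity. Qed.

Lemma Pi_mat_entry i j : exists c l b, (l < 3)%nat /\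
  forall A G, Pi_mat A G i j = c * (if b : bool then A l else G l).
Proof.
  do 6 (destruct i as [|i]; [do 7 (destruct j as [|j]; [first
    [ exists 0, 0%nat, true; split; [lia|intros; simpl; ring]
    | exists 1, 0%nat, true; split; [lia|intros; simpl; ring]
    | exists 1, 1%nat, true; split; [lia|intros; simpl; ring]
    | exists 1, 2%nat, true; split; [lia|intros; simpl; ring]
    | exists (-1), 0%nat, true; split; [lia|intros; simpl; ring]
    | exists (-1), 1%nat, true; split; [lia|intros; simpl; ring]
    | exists (-1), 2%nat, true; split; [lia|intros; simpl; ring]
    | exists 1, 0%nat, false; split; [lia|intros; simpl; ring]
    | exists 1, 1%nat, false; split; [lia|intros; simpl; ring]
    | exists 1, 2%nat, false; split; [lia|intros; simpl; ring]
    | exists (-1), 0%nat, false; split; [lia|intros; simpl; ring]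
    | exists (-1), 1%nat, false; split; [lia|intros; simpl; ring]
    | exists (-1), 2%nat, false; split; [lia|intros; simpl; ring] ]|]);
    exists 0, 0%nat, true; split; [lia|intros; simpl; ring]|]).
  exists 0, 0%nat, true; split; [lia|intros; simpl; ring].
Qed.

Lemma Pi_mat_skew A G a b : Pi_mat A G b a = - Pi_mat A G a b.
Proof.
  do 6 (destruct a as [|a]; [do 7 (destruct b as [|b]; [simpl; ring|]); simpl; ring|]).
  destruct b as [|[|[|[|[|[|b]]]]]]; simpl; ring.
Qed.

Lemma Pi_mat_ext A G A' G' i j :
  (forall l, (l < 3)%nat -> A l = A' l) -> (forall l, (l < 3)%nat -> G l = G' l) ->
  Pi_mat A G i j = Pi_mat A' G' i j.
Proof.
  intros HA HG. destruct (Pi_mat_entry i j) as [c [l [b [Hl Hc]]]]. rewrite !Hc.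
  destruct b; [rewrite HA|rewrite HG]; auto.
Qed.

Lemma open_Omega D : open_n 3 (fun x => D (x 0%nat, x 1%nat, x 2%nat)) -> open_n 6 (Omega D).
Proof.
  intros H x Hx. destruct (H (fun j => x (3 + j)%nat) Hx) as [r [Hr Hr']].
  exists r; split; auto. intros y Hy. apply (Hr' (fun j => y (3 + j)%nat)).
  unfold distn, sumn in *. simpl in *.
  pose proof (Rabs_pos (y 0%nat - x 0%nat)). pose proof (Rabs_pos (y 1%nat - x 1%nat)).
  pose proof (Rabs_pos (y 2%nat - x 2%nat)). lra.
Qed.

Lemma open_DxR D : open_n 3 (fun x => D (x 0%nat, x 1%nat, x 2%nat)) -> open_n 4 (DxR D).
Proof.
  intros H x Hx. destruct (H x Hx) as [r [Hr Hr']].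
  exists r; split; auto. intros y Hy. apply (Hr' y).
  unfold distn, sumn in *. simpl in *. pose proof (Rabs_pos (y 3%nat - x 3%nat)). lra.
Qed.

Section SmoothMu.
Variables (D : R3 -> Prop) (mu : R3 -> R3 -> R3).
Hypothesis HDopen : open_n 3 (fun x => D (x 0%nat, x 1%nat, x 2%nat)).
Hypothesis Hmu : smooth_mu D mu.

Lemma smooth_mu_coord l : smooth_on 6 (Omega D) (mu_coord mu l).
Proof. destruct Hmu as [H1 [H2 H3]]. destruct l as [|[|l]]; auto. Qed.

Lemma smooth_Pi i j : smooth_on 6 (Omega D) (fun y => Pi mu y i j).
Proof.
  pose proof (open_Omega D HDopen) as HOm.
  destruct (Pi_mat_entry i j) as [c [l [b [Hl Hc]]]].
  apply (smooth_on_local 6 _ (fun y => c * (if b then y l + mu_coord mu l y else y (3 + l)%nat))); auto.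
  { intros y _. now rewrite Pi_eq_Pi_mat, Hc. }
  apply smooth_on_mult; auto; [apply smooth_on_const|].
  destruct b.
  - apply smooth_on_plus; auto; [apply smooth_on_coord; lia|apply smooth_mu_coord].
  - apply smooth_on_coord; lia.
Qed.

Definition dPi (x : Vec) (k i j : nat) : R := pd k (fun y => Pi mu y i j) x.

Lemma dPi_eq x k i j : Omega D x -> (k < 6)%nat ->
  dPi x k i j = Pi_mat (fun l => (if Nat.eqb l k then 1 else 0) + pd k (mu_coord mu l) x)
                       (fun l => if Nat.eqb (3 + l) k then 1 else 0) i j.
Proof.
  intros Hx Hk. unfold dPi.
  destruct (Pi_mat_entry i j) as [c [l [b [Hl Hc]]]]. rewrite Hc.
  apply pd_eq. destruct b.
  - apply (derivable_pt_lim_ext (fun t => c * (upd x k t l + mu_coord mu l (upd x k t)))).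
    { intro t. now rewrite Pi_eq_Pi_mat, Hc. }
    eapply derivable_pt_lim_value.
    + apply (derivable_pt_lim_mult (fun _ => c)); [apply derivable_pt_lim_const|].
      apply derivable_pt_lim_plus; [apply derivable_pt_lim_upd|].
      apply (cont_partials_pd 6 (Omega D)); auto. apply smooth_on_cont_partials, smooth_mu_coord.
    + ring.
  - apply (derivable_pt_lim_ext (fun t => c * (upd x k t (3 + l)%nat))).
    { intro t. now rewrite Pi_eq_Pi_mat, Hc. }
    eapply derivable_pt_lim_value.
    + apply (derivable_pt_lim_mult (fun _ => c)); [apply derivable_pt_lim_const|].
      apply derivable_pt_lim_upd.
    + ring.
Qed.

Lemma pd_bracket g h x k : smooth_on 6 (Omega D) g -> smooth_on 6 (Omega D) h -> Omega D x ->
  (k < 6)%nat ->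
  pd k (bracket mu g h) x =
  bracket_grad (Pi mu x) (dPi x) (fun i => pd i g x) (fun j => pd j h x)
     (fun k i => pd k (pd i g) x) (fun k j => pd k (pd j h) x) k.
Proof.
  intros Hg Hh Hx Hk. apply pd_eq. unfold bracket, bracket_grad.
  apply (derivable_pt_lim_sumn 6 (fun i t => sumn 6 (fun j =>
           pd i g (upd x k t) * Pi mu (upd x k t) i j * pd j h (upd x k t)))).
  intros i Hi.
  apply (derivable_pt_lim_sumn 6 (fun j t =>
           pd i g (upd x k t) * Pi mu (upd x k t) i j * pd j h (upd x k t))).
  intros j Hj.
  assert (D1 : derivable_pt_lim (fun t => pd i g (upd x k t)) (x k) (pd k (pd i g) x)).
  { apply (cont_partials_pd 6 (Omega D)); auto. apply smooth_on_cont_partials, smooth_on_pd; auto. }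
  assert (D2 : derivable_pt_lim (fun t => Pi mu (upd x k t) i j) (x k) (dPi x k i j)).
  { apply (cont_partials_pd 6 (Omega D) (fun y => Pi mu y i j)); auto.
    apply smooth_on_cont_partials, smooth_Pi. }
  assert (D3 : derivable_pt_lim (fun t => pd j h (upd x k t)) (x k) (pd k (pd j h) x)).
  { apply (cont_partials_pd 6 (Omega D)); auto. apply smooth_on_cont_partials, smooth_on_pd; auto. }
  pose proof (derivable_pt_lim_mult _ _ _ _ _ (derivable_pt_lim_mult _ _ _ _ _ D1 D2) D3) as H.
  unfold mult_fct in H. cbv beta in H. rewrite upd_id in H.
  eapply derivable_pt_lim_value; [exact H|]. ring.
Qed.

Lemma jacobi_sum_eq f g h x :
  smooth_on 6 (Omega D) f -> smooth_on 6 (Omega D) g -> smooth_on 6 (Omega D) h -> Omega D x ->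
  bracket mu f (bracket mu g h) x + bracket mu g (bracket mu h f) x + bracket mu h (bracket mu f g) x =
  sumn 6 (fun a => sumn 6 (fun i => sumn 6 (fun j =>
     pd a f x * pd i g x * pd j h x * jacobiator (Pi mu x) (dPi x) a i j))).
Proof.
  intros Hf Hg Hh Hx. pose proof (open_Omega D HDopen) as HOm.
  assert (Sym : forall u, smooth_on 6 (Omega D) u -> forall a b, (a < 6)%nat -> (b < 6)%nat ->
             pd b (pd a u) x = pd a (pd b u) x).
  { intros u Hu a b Ha Hb. apply (pd_comm 6 (Omega D)); auto. now apply smooth_onE. }
  assert (E : forall u v w, smooth_on 6 (Omega D) u -> smooth_on 6 (Omega D) v ->
     smooth_on 6 (Omega D) w ->
     bracket mu u (bracket mu v w) x =
     bform (Pi mu x) (fun a => pd a u x)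
        (bracket_grad (Pi mu x) (dPi x) (fun i => pd i v x) (fun j => pd j w x)
           (fun k i => pd k (pd i v) x) (fun k j => pd k (pd j w) x))).
  { intros u v w Hu Hv Hw. unfold bracket at 1, bform.
    apply sumn_ext; intros a Ha. apply sumn_ext; intros k Hk. rewrite pd_bracket; auto. }
  rewrite !E; auto.
  apply jacobi_sum_algebraic; try (intros; apply Sym; auto).
  intros a b Ha Hb. rewrite !Pi_eq_Pi_mat. apply Pi_mat_skew.
Qed.

Lemma sumn3_pd_coord (x : Vec) a0 i0 j0 (T : nat -> nat -> nat -> R) :
  (a0 < 6)%nat -> (i0 < 6)%nat -> (j0 < 6)%nat ->
  sumn 6 (fun a => sumn 6 (fun i => sumn 6 (fun j =>
     pd a (fun y => y a0) x * pd i (fun y => y i0) x * pd j (fun y => y j0) x * T a i j))) =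
  T a0 i0 j0.
Proof.
  intros Ha Hi Hj.
  transitivity (sumn 6 (fun a => (if Nat.eqb a0 a then 1 else 0) *
                  sumn 6 (fun i => (if Nat.eqb i0 i then 1 else 0) *
                  sumn 6 (fun j => (if Nat.eqb j0 j then 1 else 0) * T a i j)))).
  { apply sumn_ext; intros a _. rewrite <- sumn_scal. apply sumn_ext; intros i _.
    rewrite <- sumn_scal, <- sumn_scal. apply sumn_ext; intros j _. rewrite !pd_coord. ring. }
  now rewrite !sumn_delta.
Qed.

(** Testing the Jacobi identity on coordinate functions isolates single entries. *)
Lemma Poisson_jacobiator x a i j : is_Poisson D mu -> Omega D x ->
  (a < 6)%nat -> (i < 6)%nat -> (j < 6)%nat ->
  jacobiator (Pi mu x) (dPi x) a i j = 0.
Proof.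
  intros HP Hx Ha Hi Hj.
  pose proof (HP (fun y => y a) (fun y => y i) (fun y => y j) (smooth_on_coord 6 _ a Ha)
     (smooth_on_coord 6 _ i Hi) (smooth_on_coord 6 _ j Hj) x Hx) as H.
  rewrite jacobi_sum_eq in H; try apply smooth_on_coord; auto.
  now rewrite sumn3_pd_coord in H.
Qed.

Lemma jacobiator_Pi x (dmu : nat -> nat -> R) a i j : Omega D x ->
  (forall k l, (k < 6)%nat -> (l < 3)%nat -> pd k (mu_coord mu l) x = dmu k l) ->
  jacobiator (Pi mu x) (dPi x) a i j =
  jacobiator (Pi_mat (fun l => x l + mu_coord mu l x) (fun l => x (3 + l)%nat))
     (fun k => Pi_mat (fun l => (if Nat.eqb l k then 1 else 0) + dmu k l)
                      (fun l => if Nat.eqb (3 + l) k then 1 else 0)) a i j.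
Proof.
  intros Hx Hd. unfold jacobiator. apply sumn_ext; intros k Hk.
  rewrite !Pi_eq_Pi_mat, !dPi_eq by auto.
  rewrite !(Pi_mat_ext
     (fun l => (if Nat.eqb l k then 1 else 0) + pd k (mu_coord mu l) x)
     (fun l => if Nat.eqb (3 + l) k then 1 else 0)
     (fun l => (if Nat.eqb l k then 1 else 0) + dmu k l)
     (fun l => if Nat.eqb (3 + l) k then 1 else 0)); auto.
  all: intros; rewrite Hd; auto.
Qed.

End SmoothMu.

(** * The Jacobiator when [mu] factors through [(M, gamma) |-> (gamma, M . gamma)] *)

Definition psi (y : Vec) : Vec := pack4 (vG y) (dot3 (vM y) (vG y)).

(** [dpsi Mv gv k c] is [pd k] of the [c]-th component of [psi] at [(Mv, gv)]. *)
Definition dpsi (Mv gv : nat -> R) (k c : nat) : R :=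
  if Nat.ltb c 3 then (if Nat.eqb (3 + c) k then 1 else 0)
  else match k with
       | 0%nat => gv 0%nat | 1%nat => gv 1%nat | 2%nat => gv 2%nat
       | 3%nat => Mv 0%nat | 4%nat => Mv 1%nat | 5%nat => Mv 2%nat | _ => 0 end.

Definition levi_civita (a i j : nat) : R :=
  match a, i, j with
  | 0%nat, 1%nat, 2%nat => 1 | 1%nat, 2%nat, 0%nat => 1 | 2%nat, 0%nat, 1%nat => 1
  | 0%nat, 2%nat, 1%nat => -1 | 2%nat, 1%nat, 0%nat => -1 | 1%nat, 0%nat, 2%nat => -1
  | _, _, _ => 0 end.

(** The left-hand side of the Jacobi condition, with [nd l c] standing for [pd c] of [nu_l]
    and [mv] for [nu]. *)
Definition jacobi_expr (gv mv : nat -> R) (nd : nat -> nat -> R) : R :=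
  gv 0%nat * (nd 2%nat 1%nat - nd 1%nat 2%nat) + gv 1%nat * (nd 0%nat 2%nat - nd 2%nat 0%nat)
  + gv 2%nat * (nd 1%nat 0%nat - nd 0%nat 1%nat)
  + (mv 0%nat * (gv 1%nat * nd 2%nat 3%nat - gv 2%nat * nd 1%nat 3%nat)
   + mv 1%nat * (gv 2%nat * nd 0%nat 3%nat - gv 0%nat * nd 2%nat 3%nat)
   + mv 2%nat * (gv 0%nat * nd 1%nat 3%nat - gv 1%nat * nd 0%nat 3%nat)).

Lemma jacobiator_factored (Mv gv mv : nat -> R) (nd : nat -> nat -> R) a i j :
  let dm := fun k l => sumn 4 (fun c => nd l c * dpsi Mv gv k c) in
  jacobiator (Pi_mat (fun l => Mv l + mv l) gv)
     (fun k => Pi_mat (fun l => (if Nat.eqb l k then 1 else 0) + dm k l)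
                      (fun l => if Nat.eqb (3 + l) k then 1 else 0))
     a i j = - levi_civita a i j * jacobi_expr gv mv nd.
Proof.
  intros dm. unfold jacobiator, dm.
  destruct a as [|[|[|[|[|[|a]]]]]]; destruct i as [|[|[|[|[|[|i]]]]]]; destruct j as [|[|[|[|[|[|j]]]]]].
  all: unfold sumn, jacobi_expr; cbn; ring.
Qed.

Definition cross_coord (gv u : nat -> R) (c : nat) : R :=
  match c with
  | 0%nat => gv 1%nat * u 2%nat - gv 2%nat * u 1%nat
  | 1%nat => gv 2%nat * u 0%nat - gv 0%nat * u 2%nat
  | _ => gv 0%nat * u 1%nat - gv 1%nat * u 0%nat
  end.

(** Entries with one [gamma]-index and two [M]-indices, for arbitrary [mu]. *)
Lemma jacobiator_mixed (Mv gv mv : nat -> R) (dm : nat -> nat -> R) c l :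
  (c < 3)%nat -> (l < 3)%nat ->
  jacobiator (Pi_mat (fun l => Mv l + mv l) gv)
     (fun k => Pi_mat (fun l => (if Nat.eqb l k then 1 else 0) + dm k l)
                      (fun l => if Nat.eqb (3 + l) k then 1 else 0))
     (3 + c) (S l mod 3) (S (S l) mod 3) = - cross_coord gv (fun b => dm b l) c.
Proof.
  intros Hc Hl. unfold jacobiator.
  destruct c as [|[|[|c]]]; try lia; destruct l as [|[|[|l]]]; try lia.
  all: unfold sumn, cross_coord; cbn; ring.
Qed.

Lemma Poisson_gradM_parallel D mu x c l :
  open_n 3 (fun x => D (x 0%nat, x 1%nat, x 2%nat)) -> smooth_mu D mu ->
  is_Poisson D mu -> Omega D x -> (c < 3)%nat -> (l < 3)%nat ->
  cross_coord (fun l => x (3 + l)%nat) (fun b => pd b (mu_coord mu l) x) c = 0.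
Proof.
  intros HD Hmu HP Hx Hc Hl.
  pose proof (Poisson_jacobiator D mu HD Hmu x (3 + c) (S l mod 3) (S (S l) mod 3) HP Hx ltac:(lia)
     ltac:(pose proof (Nat.mod_upper_bound (S l) 3); lia)
     ltac:(pose proof (Nat.mod_upper_bound (S (S l)) 3); lia)) as H.
  rewrite (jacobiator_Pi D mu Hmu x (fun k l => pd k (mu_coord mu l) x)) in H; auto.
  rewrite (jacobiator_mixed (fun l => x l) (fun l => x (3 + l)%nat) (fun l => mu_coord mu l x)) in H;
    auto.
  lra.
Qed.

Lemma smooth_on_psi U c : open_n 6 U -> (c < 4)%nat -> smooth_on 6 U (fun y => psi y c).
Proof.
  intros Hop Hc. destruct c as [|[|[|[|c]]]]; try lia.
  1-3: apply smooth_on_coord; lia.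
  change (smooth_on 6 U (fun y => y 0%nat * y 3%nat + y 1%nat * y 4%nat + y 2%nat * y 5%nat)).
  repeat apply smooth_on_plus; auto; apply smooth_on_mult; auto; apply smooth_on_coord; lia.
Qed.

Lemma pd_psi x k c : (c < 4)%nat -> (k < 6)%nat ->
  pd k (fun y => psi y c) x = dpsi (fun l => x l) (fun l => x (3 + l)%nat) k c.
Proof.
  intros Hc Hk. destruct c as [|[|[|[|c]]]]; try lia.
  1-3: apply pd_coord.
  change (pd k (fun y => y 0%nat * y 3%nat + y 1%nat * y 4%nat + y 2%nat * y 5%nat) x =
          dpsi (fun l => x l) (fun l => x (3 + l)%nat) k 3).
  apply pd_eq. eapply derivable_pt_lim_value.
  - repeat apply derivable_pt_lim_plus;
      apply (derivable_pt_lim_mult (fun t => upd x k t _) (fun t => upd x k t _));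
      apply derivable_pt_lim_upd.
  - rewrite !upd_id. destruct k as [|[|[|[|[|[|k]]]]]]; try lia; cbn; ring.
Qed.

Section Factored.
Variables (D : R3 -> Prop) (mu : R3 -> R3 -> R3) (nu : R3 -> R -> R3).
Hypothesis HDopen : open_n 3 (fun x => D (x 0%nat, x 1%nat, x 2%nat)).
Hypothesis Hmu : smooth_mu D mu.
Hypothesis Hnu : smooth_nu D nu.
Hypothesis Hfactor : forall M g, D g -> mu M g = nu g (dot3 M g).

Lemma mu_coord_factor y l : Omega D y -> mu_coord mu l y = nu4 nu l (psi y).
Proof. intro Hy. unfold mu_coord, psi. rewrite (Hfactor (vM y) (vG y) Hy). now destruct l as [|[|l]]. Qed.

Lemma pd_mu_coord x k l : Omega D x -> (k < 6)%nat ->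
  pd k (mu_coord mu l) x =
  sumn 4 (fun c => pd c (nu4 nu l) (psi x) * dpsi (fun l => x l) (fun l => x (3 + l)%nat) k c).
Proof.
  intros Hx Hk. pose proof (open_Omega D HDopen) as HOm.
  rewrite (pd_local 6 (Omega D) (mu_coord mu l) (fun y => nu4 nu l (psi y)) k HOm
             (fun y Hy => mu_coord_factor y l Hy) x Hx).
  assert (Hpsi0 : forall y j, (4 <= j)%nat -> psi y j = 0).
  { intros y j Hj. unfold psi, pack4. destruct j as [|[|[|[|j]]]]; auto; lia. }
  assert (Hnu_l : Ck_on 4 (DxR D) 1 (nu4 nu l)).
  { apply smooth_on_C1. destruct Hnu as [H0 [H1 H2]]. now destruct l as [|[|l]]. }
  rewrite (pd_comp 6 4 (Omega D) (DxR D) psi (open_DxR D HDopen)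
             (fun j Hj => smooth_on_psi _ j HOm Hj) (fun y Hy => Hy) Hpsi0 (nu4 nu l) k x Hnu_l Hk Hx).
  apply sumn_ext; intros c Hc. rewrite pd_psi; auto; lia.
Qed.

Lemma jacobiator_Pi_factored x a i j : Omega D x ->
  jacobiator (Pi mu x) (dPi mu x) a i j =
  - levi_civita a i j *
    (dot3 (vG x) (curl_g nu (vG x) (dot3 (vM x) (vG x)))
     + dot3 (nu (vG x) (dot3 (vM x) (vG x))) (cross3 (vG x) (ds_nu nu (vG x) (dot3 (vM x) (vG x))))).
Proof.
  intro Hx.
  rewrite (jacobiator_Pi D mu Hmu x (fun k l => sumn 4 (fun c =>
             pd c (nu4 nu l) (psi x) * dpsi (fun l => x l) (fun l => x (3 + l)%nat) k c))) by
    (auto; intros; apply pd_mu_coord; auto).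
  rewrite (jacobiator_factored (fun l => x l) (fun l => x (3 + l)%nat) (fun l => mu_coord mu l x)
             (fun l c => pd c (nu4 nu l) (psi x))).
  f_equal. rewrite <- (Hfactor (vM x) (vG x) Hx).
  unfold jacobi_expr, mu_coord, curl_g, ds_nu, psi, dot3, cross3.
  cbn [c1 c2 c3 fst snd vG vM Nat.add]. ring.
Qed.

Lemma Poisson_of_jacobi_condition : jacobi_condition D nu -> is_Poisson D mu.
Proof.
  intros HJ f g h Hf Hg Hh x Hx.
  rewrite (jacobi_sum_eq D mu HDopen Hmu); auto.
  apply sumn_zero; intros a Ha. apply sumn_zero; intros i Hi. apply sumn_zero; intros j Hj.
  rewrite jacobiator_Pi_factored, HJ; auto. ring.
Qed.

Lemma jacobi_condition_at_of_Poisson x : Omega D x -> is_Poisson D mu ->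
  dot3 (vG x) (curl_g nu (vG x) (dot3 (vM x) (vG x)))
  + dot3 (nu (vG x) (dot3 (vM x) (vG x))) (cross3 (vG x) (ds_nu nu (vG x) (dot3 (vM x) (vG x))))
  = 0.
Proof.
  intros Hx HP.
  pose proof (Poisson_jacobiator D mu HDopen Hmu x 0 1 2 HP Hx ltac:(lia) ltac:(lia) ltac:(lia)) as H.
  rewrite jacobiator_Pi_factored in H; auto. unfold levi_civita in H. lra.
Qed.

End Factored.

(** * Construction of [nu] from a Poisson [mu] *)

Lemma const_on_line n V F (c : R -> Vec) (v : Vec) : open_n n V -> Ck_on n V 1 F ->
  (forall t j, c t j = c 0 j + t * v j) -> (forall j, (n <= j)%nat -> v j = 0) ->
  (forall t, V (c t)) -> (forall t, sumn n (fun k => pd k F (c t) * v k) = 0) ->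
  F (c 1) = F (c 0).
Proof.
  intros HV HF Hc Hv HcV Hperp.
  assert (Hd : forall t, derivable_pt_lim (fun t => F (c t)) t 0).
  { intro t. rewrite <- (Hperp t). apply (chain_rule n V F HV HF); auto.
    - intros t' j Hj. rewrite (Hc t' j), (Hc t j), Hv by auto. ring.
    - intros k Hk. apply (derivable_pt_lim_ext (fun t => c 0 k + t * v k)); [intro t'; symmetry; apply Hc|].
      eapply derivable_pt_lim_value.
      + apply derivable_pt_lim_plus; [apply derivable_pt_lim_const|].
        apply (derivable_pt_lim_mult (fun t => t) (fun _ => v k));
          [apply derivable_pt_lim_id|apply derivable_pt_lim_const].
      + ring. }
  destruct (MVT_cor2 (fun t => F (c t)) (fun _ => 0) 0 1 ltac:(lra) (fun t _ => Hd t))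
    as [t [Ht _]].
  lra.
Qed.

Lemma perp_of_parallel (g1 g2 g3 v1 v2 v3 w1 w2 w3 : R) :
  g1 * g1 + g2 * g2 + g3 * g3 <> 0 -> g1 * w1 + g2 * w2 + g3 * w3 = 0 ->
  g2 * v3 - g3 * v2 = 0 -> g3 * v1 - g1 * v3 = 0 -> g1 * v2 - g2 * v1 = 0 ->
  v1 * w1 + v2 * w2 + v3 * w3 = 0.
Proof.
  intros Hq Hw C1 C2 C3.
  (* Lagrange's identity *)
  assert (E : (g1 * g1 + g2 * g2 + g3 * g3) * (v1 * w1 + v2 * w2 + v3 * w3) =
    (g1 * v1 + g2 * v2 + g3 * v3) * (g1 * w1 + g2 * w2 + g3 * w3)
    + (g2 * v3 - g3 * v2) * (g2 * w3 - g3 * w2) + (g3 * v1 - g1 * v3) * (g3 * w1 - g1 * w3)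
    + (g1 * v2 - g2 * v1) * (g1 * w2 - g2 * w1)) by ring.
  rewrite Hw, C1, C2, C3, !Rmult_0_l, Rmult_0_r, !Rplus_0_r in E.
  apply Rmult_integral in E as [E|E]; [contradiction|exact E].
Qed.

Lemma dot3_self_neq0 g : g <> zero3 -> dot3 g g <> 0.
Proof.
  destruct g as [[a b] c]. unfold dot3, zero3, c1, c2, c3; simpl. intros H E. apply H.
  pose proof (Rle_0_sqr a). pose proof (Rle_0_sqr b). pose proof (Rle_0_sqr c). unfold Rsqr in *.
  assert (Ha : a * a = 0) by lra. assert (Hb : b * b = 0) by lra. assert (Hc : c * c = 0) by lra.
  apply Rmult_integral in Ha, Hb, Hc.
  destruct Ha, Hb, Hc; now subst.
Qed.

Lemma R3_eq (u v : R3) : c1 u = c1 v -> c2 u = c2 v -> c3 u = c3 v -> u = v.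
Proof. destruct u as [[a b] c], v as [[a' b'] c']. unfold c1, c2, c3; simpl. intros; now subst. Qed.

Definition point6 (M g : R3) : Vec := fun j =>
  match j with
  | 0%nat => c1 M | 1%nat => c2 M | 2%nat => c3 M
  | 3%nat => c1 g | 4%nat => c2 g | 5%nat => c3 g | _ => 0 end.

Lemma vM_point6 M g : vM (point6 M g) = M.
Proof. destruct M as [[m1 m2] m3]. reflexivity. Qed.

Lemma vG_point6 M g : vG (point6 M g) = g.
Proof. destruct g as [[g1 g2] g3]. reflexivity. Qed.

Definition scale3 (a : R) (g : R3) : R3 := (a * c1 g, a * c2 g, a * c3 g).

(** [M . gamma = s] has the solution [M = s gamma / |gamma|^2]; [nu] is [mu] evaluated there. *)
Definition nu_of_mu (mu : R3 -> R3 -> R3) (g : R3) (s : R) : R3 := mu (scale3 (s / dot3 g g) g) g.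

Lemma dot3_scale3 g s : dot3 g g <> 0 -> dot3 (scale3 (s / dot3 g g) g) g = s.
Proof. intro Hq. unfold scale3, dot3 in *. cbn [c1 c2 c3 fst snd] in *. field. exact Hq. Qed.

Definition norm2_3 (y : Vec) : R := dot3 (y 0%nat, y 1%nat, y 2%nat) (y 0%nat, y 1%nat, y 2%nat).

Definition lift_DxR (y : Vec) : Vec := fun j =>
  match j with
  | 0%nat => y 3%nat / norm2_3 y * y 0%nat | 1%nat => y 3%nat / norm2_3 y * y 1%nat
  | 2%nat => y 3%nat / norm2_3 y * y 2%nat
  | 3%nat => y 0%nat | 4%nat => y 1%nat | 5%nat => y 2%nat | _ => 0 end.

Section FromPoisson.
Variables (D : R3 -> Prop) (mu : R3 -> R3 -> R3).
Hypothesis HDopen : open_n 3 (fun x => D (x 0%nat, x 1%nat, x 2%nat)).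
Hypothesis HD0 : forall g, D g -> g <> zero3.
Hypothesis Hmu : smooth_mu D mu.

Let HDxR : open_n 4 (DxR D) := open_DxR D HDopen.
Let HOm : open_n 6 (Omega D) := open_Omega D HDopen.

Lemma smooth_on_inv_norm2 : smooth_on 4 (DxR D) (fun y => / norm2_3 y).
Proof.
  apply (smooth_on_comp 4 1 (DxR D) nonzero0 (fun y j => if Nat.eqb j 0 then norm2_3 y else 0)
           HDxR open_nonzero0) with (F := fun z => / z 0%nat).
  - intros j Hj. assert (j = 0%nat) by lia. subst. cbn.
    change (smooth_on 4 (DxR D) (fun y => y 0%nat * y 0%nat + y 1%nat * y 1%nat + y 2%nat * y 2%nat)).
    repeat apply smooth_on_plus; auto; apply smooth_on_mult; auto; apply smooth_on_coord; lia.
  - intros y Hy. apply dot3_self_neq0, HD0, Hy.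
  - intros y [|j] Hj; [lia|reflexivity].
  - apply smooth_on_inv.
Qed.

Lemma smooth_nu_of_mu : smooth_nu D (nu_of_mu mu).
Proof.
  assert (Hlift : forall j, (j < 6)%nat -> smooth_on 4 (DxR D) (fun y => lift_DxR y j)).
  { intros j Hj. destruct j as [|[|[|[|[|[|j]]]]]]; try lia; cbn [lift_DxR].
    1-3: unfold Rdiv; repeat apply smooth_on_mult; auto;
      solve [apply smooth_on_coord; lia | apply smooth_on_inv_norm2].
    all: apply smooth_on_coord; lia. }
  assert (Hl : forall l, smooth_on 4 (DxR D) (fun y => mu_coord mu l (lift_DxR y))).
  { intro l. apply (smooth_on_comp 4 6 (DxR D) (Omega D) lift_DxR HDxR HOm Hlift).
    - intros y Hy. exact Hy.
    - intros y j Hj. do 6 (destruct j as [|j]; [lia|]). reflexivity.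
    - apply smooth_mu_coord; auto. }
  split; [|split]; [apply (Hl 0%nat)|apply (Hl 1%nat)|apply (Hl 2%nat)].
Qed.

Hypothesis HP : is_Poisson D mu.

(** [grad_M mu_l] is parallel to [gamma], so [mu] is constant on the planes [M . gamma = s]. *)
Lemma mu_factor M g : D g -> mu M g = nu_of_mu mu g (dot3 M g).
Proof.
  intros Hg. pose proof (dot3_self_neq0 g (HD0 g Hg)) as Hq.
  unfold nu_of_mu. set (M' := scale3 (dot3 M g / dot3 g g) g).
  set (w := (c1 M - c1 M', c2 M - c2 M', c3 M - c3 M')).
  set (c := fun t => point6 (c1 M' + t * c1 w, c2 M' + t * c2 w, c3 M' + t * c3 w) g).
  assert (Hw : c1 g * c1 w + c2 g * c2 w + c3 g * c3 w = 0).
  { pose proof (dot3_scale3 g (dot3 M g) Hq) as E. fold M' in E.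
    unfold w, dot3 in *. cbn [c1 c2 c3 fst snd] in *. lra. }
  assert (Hconst : forall l, (l < 3)%nat -> mu_coord mu l (c 1) = mu_coord mu l (c 0)).
  { intros l Hl.
    apply (const_on_line 6 (Omega D) _ c (point6 w zero3) HOm).
    - apply smooth_on_C1, smooth_mu_coord; auto.
    - intros t j. unfold c, point6. do 6 (destruct j as [|j]; [cbn; ring|]). cbn; ring.
    - intros j Hj. do 6 (destruct j as [|j]; [lia|]). reflexivity.
    - intro t. unfold c, Omega. now rewrite vG_point6.
    - intro t.
      pose proof (fun b Hb => Poisson_gradM_parallel D mu (c t) b l HDopen Hmu HP
                                ltac:(unfold c, Omega; now rewrite vG_point6) Hb Hl) as C.
      pose proof (C 0%nat ltac:(lia)) as C0. pose proof (C 1%nat ltac:(lia)) as C1.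
      pose proof (C 2%nat ltac:(lia)) as C2.
      unfold cross_coord in C0, C1, C2. cbn [Nat.add c point6] in C0, C1, C2.
      unfold sumn. cbn [map seq fold_right point6 c1 c2 c3 fst snd zero3].
      unfold dot3 in Hq.
      pose proof (perp_of_parallel (c1 g) (c2 g) (c3 g) _ _ _ _ _ _ Hq Hw C0 C1 C2). lra. }
  assert (HM1 : vM (c 1) = M).
  { unfold c. rewrite vM_point6. apply R3_eq; unfold w; cbn [c1 c2 c3 fst snd]; ring. }
  assert (HM0 : vM (c 0) = M').
  { unfold c. rewrite vM_point6. apply R3_eq; cbn [c1 c2 c3 fst snd]; ring. }
  assert (HG : forall t, vG (c t) = g) by (intro; apply vG_point6).
  pose proof (Hconst 0%nat ltac:(lia)) as E0. pose proof (Hconst 1%nat ltac:(lia)) as E1.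
  pose proof (Hconst 2%nat ltac:(lia)) as E2. unfold mu_coord in E0, E1, E2.
  rewrite HM1, HM0, !HG in E0, E1, E2.
  now apply R3_eq.
Qed.

Lemma jacobi_condition_nu_of_mu : jacobi_condition D (nu_of_mu mu).
Proof.
  intros g s Hg. pose proof (dot3_self_neq0 g (HD0 g Hg)) as Hq.
  set (x := point6 (scale3 (s / dot3 g g) g) g).
  assert (Hx : Omega D x) by (unfold Omega, x; now rewrite vG_point6).
  pose proof (jacobi_condition_at_of_Poisson D mu (nu_of_mu mu) HDopen Hmu smooth_nu_of_mu mu_factor
                x Hx HP) as H.
  unfold x in H. now rewrite vG_point6, vM_point6, dot3_scale3 in H.
Qed.

End FromPoisson.

Theorem mainTheorem1 (D : R3 -> Prop) (mu : R3 -> R3 -> R3)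
  (HDopen : open_n 3 (fun x => D (x 0%nat, x 1%nat, x 2%nat)))
  (HD0 : forall g, D g -> g <> zero3)
  (Hmu : smooth_mu D mu) :
  is_Poisson D mu <->
  exists nu : R3 -> R -> R3,
    smooth_nu D nu /\
    (forall M g, D g -> mu M g = nu g (dot3 M g)) /\
    jacobi_condition D nu.
Proof.
  split.
  - intro HP. exists (nu_of_mu mu). split; [|split].
    + exact (smooth_nu_of_mu D mu HDopen HD0 Hmu).
    + exact (mu_factor D mu HDopen HD0 Hmu HP).
    + exact (jacobi_condition_nu_of_mu D mu HDopen HD0 Hmu HP).
  - intros [nu [Hnu [Hfactor HJ]]].
    exact (Poisson_of_jacobi_condition D mu nu HDopen Hmu Hnu Hfactor HJ).
Qed.
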